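(* (i) Let $(X_n)$ be a norm-bounded sequence in $B(\mathcal H)^d$ and, for each $n$, let $\widetilde{X_n}$ be any shift form of $X_n$. Then there is a subsequence along which $\widetilde{X_n}$ converges in the strong operator topology. In particular, for every bounded sequence $(X_n)$ in $B(\mathcal H)^d$ there exist unitaries $U_n\in B(\mathcal H)$ such that $U_n^*X_nU_n$ converges in SOT along a subsequence. (ii) Let $X\in B(\mathcal H)^d$ and let $H_n\in B(\mathcal H)^d$ with $\|H_n\|=1$ for all $n$. Then there exist unitaries $W_n\in B(\mathcal H)$, a point $(X',H')\in B(\mathcal H)^{2d}$ with $H'\ne0$, and a subsequence along which $W_n^*(X,H_n)W_n\to(X',H')$ in SOT.
   Context: $\mathcal H$ is an infinite-dimensional separable complex Hilbert space with a fixed orthonormal basis $e_1,e_2,\dots$, and $M\in B(\mathcal H)$ is the shift $Me_j=e_{j+1}$. $B(\mathcal H)^d$ has the norm $\|x\|=\max_i\|x^i\|$; SOT on $B(\mathcal H)^d$ is coordinatewise strong operator convergence; for a unitary $W$, $W^*(X,H)W=(W^*X^1W,\dots,W^*X^dW,W^*H^1W,\dots,W^*H^dW)$. For $X=(X^1,\dots,X^d)\in B(\mathcal H)^d$, $(X,M)$ denotes the $(d+1)$-tuple $(X^1,\dots,X^d,M)$. $\mathcal P(k,d)$ is the complex vector space of polynomials in $d+1$ noncommuting variables of degree at most $k$, and $\alpha(k,d)=\dim\mathcal P(k,d)$. For $k\ge0$, $V_k^X:=\{p(X,M)e_1: p\in\mathcal P(k,d)\}$. A shift form of $X$ is a tuple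 $\widetilde X=u^*Xu$ where $u\in B(\mathcal H)$ is a unitary such that for every $k\ge0$, $u(\mathrm{span}\{e_1,\dots,e_{k+1}\})\subset V_k^X$ and $u^*(V_k^X)\subset\mathrm{span}\{e_1,\dots,e_{\alpha(k,d)}\}$. (Every $X$ has at least one shift form.) *)

(* The orthonormal basis e_1, e_2, ... of the paper is eb 0, eb 1, ...
   (0-indexed: e_(j+1) = eb j). *)
From Stdlib Require Import Reals List Lia.
Open Scope R_scope.

Definition C : Type := (R * R)%type.
Definition C0 : C := (0, 0).
Definition C1 : C := (1, 0).
Definition Cadd (a b : C) : C := (fst a + fst b, snd a + snd b).
Definition Copp (a : C) : C := (- fst a, - snd a).
Definition Cmul (a b : C) : C :=
  (fst a * fst b - snd a * snd b, fst a * snd b + snd a * fst b).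
Definition Cnorm2 (a : C) : R := fst a * fst a + snd a * snd a.

Definition vec : Type := nat -> C.
Definition vadd (x y : vec) : vec := fun k => Cadd (x k) (y k).
Definition vsub (x y : vec) : vec := fun k => Cadd (x k) (Copp (y k)).
Definition vscale (a : C) (x : vec) : vec := fun k => Cmul a (x k).
Definition vzero : vec := fun _ => C0.

Definition vnorm_le (x : vec) (r : R) : Prop :=
  0 <= r /\ forall n, sum_f_R0 (fun i => Cnorm2 (x i)) n <= r * r.

Definition l2 (x : vec) : Prop := exists r, vnorm_le x r.

Definition eb (j : nat) : vec := fun k => if Nat.eqb k j then C1 else C0.

(* An operator is a map on sequences; only its restriction to l^2 matters. *)
Definition op : Type := vec -> vec.

Definition opnorm_le (T : op) (c : R) : Prop :=
  forall x r, vnorm_le x r -> vnorm_le (T x) (c * r).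

Definition is_op (T : op) : Prop :=
  (forall (a : C) (x y : vec), l2 x -> l2 y ->
     forall k, T (vadd (vscale a x) y) k = vadd (vscale a (T x)) (T y) k)
  /\ exists c, opnorm_le T c.

Definition Mshift : op := fun x k => match k with O => C0 | S k' => x k' end.

(* A unitary u is represented together with its adjoint u^* = u^(-1):
   a pair (u, v) of bounded operators, mutually inverse on H, with u
   isometric (i.e. u is a surjective isometry, v = u^* ). *)
Definition is_unitary (u v : op) : Prop :=
  is_op u /\ is_op v /\
  (forall x, l2 x -> forall k, v (u x) k = x k) /\
  (forall x, l2 x -> forall k, u (v x) k = x k) /\
  (forall x r, vnorm_le x r <-> vnorm_le (u x) r).

(* An element of B(H)^d is a family X : nat -> op, of which X 0..X (d-1)
   are the coordinates X^1..X^d. *)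
Definition tuple : Type := nat -> op.
Definition is_tuple (d : nat) (X : tuple) : Prop := forall i, (i < d)%nat -> is_op (X i).

Definition tnorm_le (d : nat) (X : tuple) (c : R) : Prop :=
  forall i, (i < d)%nat -> opnorm_le (X i) c.

Definition tnorm_eq (d : nat) (X : tuple) (c : R) : Prop :=
  tnorm_le d X c /\ forall c', tnorm_le d X c' -> c <= c'.

Definition conj_tuple (u v : op) (X : tuple) : tuple :=
  fun i x => v (X i (u x)).

Definition sot_conv_sub (d : nat) (Z : nat -> tuple) (phi : nat -> nat) (Y : tuple) : Prop :=
  forall i, (i < d)%nat -> forall x, l2 x ->
    forall eps, 0 < eps -> exists N, forall n, (N <= n)%nat ->
      vnorm_le (vsub (Z (phi n) i x) (Y i x)) eps.

Definition strictly_incr (phi : nat -> nat) : Prop := forall n, (phi n < phi (S n))%nat.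

(* Letters 0..d-1 stand for X^1..X^d, letter d for M.  A monomial (word)
   [a1; ...; am] is evaluated as the operator product a1 a2 ... am. *)
Definition letter_op (d : nat) (X : tuple) (a : nat) : op :=
  if Nat.eqb a d then Mshift else X a.

Fixpoint word_eval (d : nat) (X : tuple) (w : list nat) (x : vec) : vec :=
  match w with
  | nil => x
  | a :: w' => letter_op d X a (word_eval d X w' x)
  end.

Definition poly : Type := list (C * list nat).

Definition poly_in_P (k d : nat) (p : poly) : Prop :=
  forall cw, In cw p -> (length (snd cw) <= k)%nat /\
                        forall a, In a (snd cw) -> (a <= d)%nat.

Fixpoint poly_eval (d : nat) (X : tuple) (p : poly) (x : vec) : vec :=
  match p with
  | nil => vzero
  | (c, w) :: p' => vadd (vscale c (word_eval d X w x)) (poly_eval d X p' x)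
  end.

Definition inVk (d : nat) (X : tuple) (k : nat) (v : vec) : Prop :=
  exists p, poly_in_P k d p /\ forall m, v m = poly_eval d X p (eb 0) m.

(* alpha(k,d) = dim P(k,d) = number of words of length <= k in d+1 letters
   = sum_{j=0}^k (d+1)^j *)
Fixpoint alpha (k d : nat) : nat :=
  match k with
  | O => 1
  | S k' => (alpha k' d + Nat.pow (S d) k)%nat
  end.

Definition in_span_first (n : nat) (x : vec) : Prop :=
  forall m, (n <= m)%nat -> x m = C0.

Definition shift_form_unitary (d : nat) (X : tuple) (u v : op) : Prop :=
  is_unitary u v /\
  forall k : nat,
    (forall x, in_span_first (S k) x -> inVk d X k (u x)) /\
    (forall y, inVk d X k y -> in_span_first (alpha k d) (v y)).

(** The columns of a shift form are uniformly finitely supported: since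
    [u e_(j+1)] lies in [V_j], the vector [X^i u e_(j+1)] lies in [V_(j+1)],
    which [u^*] maps into [span{e_1, ..., e_alpha(j+1,d)}].  A norm-bounded
    sequence of tuples with this property has, by a diagonal argument, a
    subsequence along which all (countably many) matrix entries converge;
    finite support of the columns turns this into norm convergence on
    [span{e_j}], and the uniform bound extends it to all of [l^2], i.e. SOT
    convergence.  Unitaries with the same support property exist for any
    tuple: orthonormalise, by Gram-Schmidt, a sequence enumerating all words
    in [(X, M)] applied to a starting vector [x0] and to [e_1] (the shift then
    produces every [e_j]).
    For (ii) take a unit vector [x_n] with [||H_n^i x_n|| > 1/2] as starting
    vector for the [2d]-tuple [(X, H_n)], so that [u_n e_1 = x_n]; the limits of
    the [H_n]-coordinates cannot all vanish, since their first columns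
    [u_n^* H_n^i x_n] keep norm greater than [1/2]. *)

From Pilot Require Import Defs.
From Stdlib Require Import Reals Lra Lia Classical ClassicalEpsilon FunctionalExtensionality List Cantor.
From Coquelicot Require Import Coquelicot.
(* Coquelicot also defines a [C1]; ours is the complex unit of [Defs]. *)
Import Defs.
Open Scope R_scope.

Lemma C_ext (a b : C) : fst a = fst b -> snd a = snd b -> a = b.
Proof. destruct a, b; simpl; intros; subst; reflexivity. Qed.

Ltac Cring := apply C_ext; simpl; ring.

Definition Cconj (a : C) : C := (fst a, - snd a).

Lemma Cnorm2_ge_0 (a : C) : 0 <= Cnorm2 a.
Proof. destruct a; unfold Cnorm2; simpl; nra. Qed.

Lemma Cnorm2_eq_0 (a : C) : Cnorm2 a = 0 -> a = C0.
Proof. destruct a; unfold Cnorm2, C0; simpl; intros; apply C_ext; simpl; nra. Qed.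

Lemma Cnorm2_conj (a : C) : Cnorm2 (Cconj a) = Cnorm2 a.
Proof. unfold Cnorm2, Cconj; simpl; ring. Qed.

Lemma Cmul_conj_l (a : C) : Cmul (Cconj a) a = (Cnorm2 a, 0).
Proof. unfold Cmul, Cconj, Cnorm2; Cring. Qed.

Lemma Cnorm2_small (a : C) (e : R) : 0 < e -> Cnorm2 a <= e * e ->
  Rabs (fst a) <= e /\ Rabs (snd a) <= e.
Proof. destruct a; unfold Cnorm2; simpl; intros; split; apply Rabs_le; split; nra. Qed.

Lemma Un_cv_const (c : R) : Un_cv (fun _ => c) c.
Proof. intros e He. exists O. intros. unfold R_dist. rewrite Rminus_diag, Rabs_R0. auto. Qed.

Lemma Series_of_Un_cv (a : nat -> R) l : Un_cv (fun n => sum_f_R0 a n) l -> Series a = l.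
Proof. intros. apply is_series_unique, is_series_Reals. exact H. Qed.

Lemma Un_cv_Series (a : nat -> R) : ex_series a -> Un_cv (fun n => sum_f_R0 a n) (Series a).
Proof. intros. apply is_series_Reals, Series_correct. auto. Qed.

Lemma Series_lin2 (u v : nat -> R) p q : ex_series u -> ex_series v ->
  Series (fun k => p * u k + q * v k) = p * Series u + q * Series v.
Proof.
  intros. rewrite Series_plus, !Series_scal_l; auto.
  - apply (ex_series_scal_l p u); auto.
  - apply (ex_series_scal_l q v); auto.
Qed.

Lemma Series_finite (a : nat -> R) N : (forall m, (N < m)%nat -> a m = 0) -> Series a = sum_f_R0 a N.
Proof.
  intros. apply Series_of_Un_cv. intros e He. exists N. intros n Hn. unfold R_dist.
  replace (sum_f_R0 a n) with (sum_f_R0 a N). rewrite Rminus_diag, Rabs_R0; auto.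
  induction Hn. auto. simpl. rewrite H by lia. rewrite <- IHHn. ring.
Qed.

Lemma sum_f_R0_single (g : nat -> R) k : (forall m, m <> k -> g m = 0) -> sum_f_R0 g k = g k.
Proof. intros. destruct k. reflexivity. simpl. rewrite (sum_eq_R0 g k). ring. intros. apply H. lia. Qed.

Lemma Series_single (g : nat -> R) k : (forall m, m <> k -> g m = 0) -> Series g = g k.
Proof. intros. rewrite (Series_finite g k). apply sum_f_R0_single; auto. intros; apply H; lia. Qed.

Lemma Series_zero : Series (fun _ => 0) = 0.
Proof. rewrite (Series_single _ O); auto. Qed.

Lemma sum_f_R0_nonneg (a : nat -> R) n : (forall k, 0 <= a k) -> 0 <= sum_f_R0 a n.
Proof. intros. induction n; simpl. apply H. pose proof (H (S n)). lra. Qed.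

Lemma term_le_sum_f_R0 (a : nat -> R) m : (forall k, 0 <= a k) -> a m <= sum_f_R0 a m.
Proof. intros. destruct m; simpl. lra. pose proof (sum_f_R0_nonneg a m H). lra. Qed.

Lemma nonneg_series_bounded (a : nat -> R) B : (forall n, 0 <= a n) -> (forall n, sum_f_R0 a n <= B) ->
  ex_series a /\ Series a <= B /\ forall n, sum_f_R0 a n <= Series a.
Proof.
  intros Ha HB.
  assert (Hg : Un_growing (fun n => sum_f_R0 a n)) by (intro n; simpl; specialize (Ha (S n)); lra).
  destruct (growing_cv _ Hg) as [l Hl]. { exists B. intros x [n ->]. auto. }
  assert (Series a = l) by (apply Series_of_Un_cv; auto). subst l.
  split; [exists (Series a); apply is_series_Reals; auto | split].
  - apply Rnot_lt_le; intro. destruct (Hl (Series a - B)) as [N HN]; [lra|].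
    specialize (HN N (le_n _)). specialize (HB N). unfold R_dist in HN.
    rewrite Rabs_left1 in HN by (apply Rle_minus, (growing_ineq _ _ Hg Hl)). lra.
  - apply growing_ineq; auto.
Qed.

Lemma Un_cv_le (u : nat -> R) l B : Un_cv u l -> (exists N, forall m, (N <= m)%nat -> u m <= B) -> l <= B.
Proof.
  intros Hu [N HN]. apply Rnot_lt_le. intro. destruct (Hu (l - B)) as [M HM]; [lra|].
  specialize (HM (Nat.max M N) ltac:(lia)). specialize (HN (Nat.max M N) ltac:(lia)).
  unfold R_dist in HM. apply Rabs_def2 in HM. lra.
Qed.

Lemma Un_cv_Lim_seq (u : nat -> R) :
  (forall e, 0 < e -> exists N, forall n m, (N <= n)%nat -> (N <= m)%nat -> Rabs (u n - u m) <= e) ->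
  Un_cv u (real (Lim_seq u)).
Proof.
  intros. apply is_lim_seq_Reals, Lim_seq_correct', ex_lim_seq_cauchy_corr.
  intros [e He]; simpl. destruct (H (e/2)) as [N HN]; [lra|]. exists N. intros.
  specialize (HN n m H0 H1). lra.
Qed.

Definition sq (x : vec) : nat -> R := fun k => Cnorm2 (x k).
(* The squared norm; a junk value when [x] is not in [l2]. *)
Definition nrm2 (x : vec) : R := Series (sq x).

Lemma sq_ge_0 x k : 0 <= sq x k.
Proof. apply Cnorm2_ge_0. Qed.

Lemma sum_sq_ge_0 x n : 0 <= sum_f_R0 (sq x) n.
Proof. apply sum_f_R0_nonneg, sq_ge_0. Qed.

Lemma l2_of_vnorm_le x r : vnorm_le x r -> l2 x.
Proof. exists r; auto. Qed.

Lemma ex_series_sq x : l2 x -> ex_series (sq x).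
Proof. intros [r [Hr H]]. apply (nonneg_series_bounded (sq x) (r*r) (sq_ge_0 x) H). Qed.

Lemma sum_sq_le_nrm2 x : l2 x -> forall n, sum_f_R0 (sq x) n <= nrm2 x.
Proof.
  intros Hx. destruct Hx as [r [Hr H]].
  apply (nonneg_series_bounded (sq x) (r*r) (sq_ge_0 x) H).
Qed.

Lemma nrm2_ge_0 x : l2 x -> 0 <= nrm2 x.
Proof. intros. eapply Rle_trans. apply (sum_sq_ge_0 x 0). apply sum_sq_le_nrm2; auto. Qed.

Lemma vnorm_le_nrm2 x r : l2 x -> (vnorm_le x r <-> 0 <= r /\ nrm2 x <= r * r).
Proof.
  intros Hx. split.
  - intros [Hr H]. split; auto. apply (nonneg_series_bounded (sq x) (r*r) (sq_ge_0 x) H).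
  - intros [Hr H]. split; auto. intro n. eapply Rle_trans. apply sum_sq_le_nrm2; auto. auto.
Qed.

Lemma vnorm_le_sqrt_nrm2 x : l2 x -> vnorm_le x (sqrt (nrm2 x)).
Proof.
  intros. apply vnorm_le_nrm2; auto. split. apply sqrt_pos.
  rewrite sqrt_sqrt. lra. apply nrm2_ge_0; auto.
Qed.

Lemma vnorm_le_mono x r s : vnorm_le x r -> r <= s -> vnorm_le x s.
Proof. intros [Hr H] Hrs. split. lra. intro n. eapply Rle_trans. apply H. nra. Qed.

Lemma l2_of_sum_sq_bounded x B : (forall n, sum_f_R0 (sq x) n <= B) -> l2 x /\ nrm2 x <= B.
Proof.
  intros. assert (0 <= B) by (eapply Rle_trans; [apply (sum_sq_ge_0 x 0) | auto]).
  split.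
  - exists (sqrt B). split. apply sqrt_pos. intro n. rewrite sqrt_sqrt; auto.
  - apply (nonneg_series_bounded (sq x) B (sq_ge_0 x) H).
Qed.

Lemma nrm2_ext x y : (forall k, x k = y k) -> nrm2 x = nrm2 y.
Proof. intros. replace y with x; auto. apply functional_extensionality; auto. Qed.

Definition cross (x y : vec) : nat -> R :=
  fun k => fst (x k) * fst (y k) + snd (x k) * snd (y k).

Lemma sq_vadd x y k : sq (vadd x y) k = sq x k + sq y k + 2 * cross x y k.
Proof. unfold sq, cross, vadd, Cadd, Cnorm2; simpl. ring. Qed.

Lemma sum_cross_le_weighted x y n t : 0 < t ->
  2 * sum_f_R0 (cross x y) n <= t * sum_f_R0 (sq x) n + / t * sum_f_R0 (sq y) n.
Proof.
  intros Ht.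
  assert (Hpt : forall a b c e, 2*(a*c+b*e) <= t*(a*a+b*b) + /t*(c*c+e*e)).
  { intros. assert (0 < / t) by (apply Rinv_0_lt_compat; auto).
    assert (0 <= / t * ((t*a - c) * (t*a - c) + (t*b - e) * (t*b - e))) by
      (apply Rmult_le_pos; [lra | pose proof (Rle_0_sqr (t*a-c)); pose proof (Rle_0_sqr (t*b-e));
         unfold Rsqr in *; lra]).
    replace (/ t * ((t*a - c) * (t*a - c) + (t*b - e) * (t*b - e))) with
      (t * (a*a+b*b) - 2 * (a*c+b*e) + /t * (c*c+e*e)) in H0 by (field; lra).
    lra. }
  induction n; simpl; unfold cross, sq, Cnorm2 in *.
  - apply Hpt.
  - pose proof (Hpt (fst (x (S n))) (snd (x (S n))) (fst (y (S n))) (snd (y (S n)))). lra.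
Qed.

Lemma sum_cross_le x y n r s : 0 <= r -> 0 <= s ->
  sum_f_R0 (sq x) n <= r * r -> sum_f_R0 (sq y) n <= s * s ->
  sum_f_R0 (cross x y) n <= r * s.
Proof.
  intros Hr Hs Hx Hy.
  assert (Hpos : forall r s, 0 < r -> 0 < s -> sum_f_R0 (sq x) n <= r * r ->
            sum_f_R0 (sq y) n <= s * s -> sum_f_R0 (cross x y) n <= r * s).
  { clear. intros r s Hr Hs Hx Hy.
    pose proof (sum_cross_le_weighted x y n (s / r) ltac:(apply Rdiv_lt_0_compat; lra)).
    rewrite Rinv_div in H.
    assert (s / r * sum_f_R0 (sq x) n <= s / r * (r * r))
      by (apply Rmult_le_compat_l; [apply Rdiv_le_0_compat|]; lra).
    assert (r / s * sum_f_R0 (sq y) n <= r / s * (s * s))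
      by (apply Rmult_le_compat_l; [apply Rdiv_le_0_compat|]; lra).
    replace (s / r * (r * r)) with (r * s) in H0 by (field; lra).
    replace (r / s * (s * s)) with (r * s) in H1 by (field; lra). lra. }
  (* Perturb [r, s] by a small [e > 0] to reduce to the strictly positive case. *)
  apply Rnot_lt_le; intro. set (P := sum_f_R0 (cross x y) n) in *.
  set (e := Rmin 1 ((P - r * s) / (r + s + 2))).
  assert (He : 0 < e) by (apply Rmin_glb_lt; [lra | apply Rdiv_lt_0_compat; lra]).
  assert (He1 : e <= 1) by apply Rmin_l.
  assert (He2 : e * (r + s + 2) <= P - r * s).
  { assert (e <= (P - r * s) / (r + s + 2)) by apply Rmin_r.
    apply Rle_trans with ((P - r * s) / (r + s + 2) * (r + s + 2)).
    - apply Rmult_le_compat_r; lra.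
    - right; field; lra. }
  assert (P <= (r+e)*(s+e)) by (apply Hpos; try lra; eapply Rle_trans; eauto; nra).
  nra.
Qed.

Lemma vnorm_le_add x y r s : vnorm_le x r -> vnorm_le y s -> vnorm_le (vadd x y) (r + s).
Proof.
  intros [Hr Hx] [Hs Hy]. split. lra. intro n.
  change (sum_f_R0 (sq (vadd x y)) n <= (r + s) * (r + s)).
  assert (E : sum_f_R0 (sq (vadd x y)) n =
            sum_f_R0 (sq x) n + sum_f_R0 (sq y) n + 2 * sum_f_R0 (cross x y) n)
    by (induction n; simpl; rewrite ?IHn, !sq_vadd; ring).
  rewrite E. specialize (Hx n); specialize (Hy n).
  pose proof (sum_cross_le x y n r s Hr Hs Hx Hy). change (sum_f_R0 (sq x) n <= r * r) in Hx.
  change (sum_f_R0 (sq y) n <= s * s) in Hy. nra.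
Qed.

Lemma sum_sq_vscale a x n : sum_f_R0 (sq (vscale a x)) n = Cnorm2 a * sum_f_R0 (sq x) n.
Proof. induction n; simpl; rewrite ?IHn; unfold sq, vscale, Cmul, Cnorm2; simpl; ring. Qed.

Lemma vnorm_le_scale a x r s : vnorm_le x r -> 0 <= s -> Cnorm2 a <= s * s ->
  vnorm_le (vscale a x) (s * r).
Proof.
  intros [Hr H] Hs Ha. split. nra. intro n.
  change (sum_f_R0 (sq (vscale a x)) n <= s * r * (s * r)).
  rewrite sum_sq_vscale. specialize (H n). pose proof (sum_sq_ge_0 x n).
  pose proof (Cnorm2_ge_0 a). change (sum_f_R0 (sq x) n <= r * r) in H.
  apply Rle_trans with (s * s * (r * r)). apply Rmult_le_compat; auto. nra.
Qed.

Lemma l2_vadd x y : l2 x -> l2 y -> l2 (vadd x y).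
Proof. intros [r Hr] [s Hs]. exists (r+s). apply vnorm_le_add; auto. Qed.

Lemma l2_vscale a x : l2 x -> l2 (vscale a x).
Proof.
  intros [r Hr]. exists (sqrt (Cnorm2 a) * r). apply vnorm_le_scale; auto. apply sqrt_pos.
  rewrite sqrt_sqrt. lra. apply Cnorm2_ge_0.
Qed.

Lemma vnorm_le_zero r : 0 <= r -> vnorm_le vzero r.
Proof.
  intros. split; auto. intro n.
  replace (sum_f_R0 (fun i => Cnorm2 (vzero i)) n) with 0. nra.
  induction n; simpl; [|rewrite <- IHn]; unfold vzero, C0, Cnorm2; simpl; ring.
Qed.

Lemma l2_vzero : l2 vzero.
Proof. exists 0. apply vnorm_le_zero. lra. Qed.

Lemma vsub_vadd x y : vsub x y = vadd x (vscale (Copp C1) y).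
Proof. apply functional_extensionality; intro k. unfold vsub, vadd, vscale, Copp, C1, Cmul, Cadd. Cring. Qed.

Lemma l2_vsub x y : l2 x -> l2 y -> l2 (vsub x y).
Proof. intros. rewrite vsub_vadd. apply l2_vadd; auto. apply l2_vscale; auto. Qed.

Lemma vnorm_le_sub x y r s : vnorm_le x r -> vnorm_le y s -> vnorm_le (vsub x y) (r + s).
Proof.
  intros. rewrite vsub_vadd. apply vnorm_le_add; auto. replace s with (1 * s) by ring.
  apply vnorm_le_scale; auto. lra. unfold Cnorm2, Copp, C1; simpl; lra.
Qed.

Lemma vnorm_le_0 x : vnorm_le x 0 -> forall k, x k = C0.
Proof.
  intros [_ H] k. apply Cnorm2_eq_0. apply Rle_antisym. 2: apply Cnorm2_ge_0.
  eapply Rle_trans. apply (term_le_sum_f_R0 (sq x) k (sq_ge_0 x)).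
  specialize (H k). rewrite Rmult_0_l in H. exact H.
Qed.

Lemma nrm2_eq_0 x : l2 x -> nrm2 x = 0 -> forall k, x k = C0.
Proof. intros. apply vnorm_le_0. apply vnorm_le_nrm2; auto. split; lra. Qed.

Lemma eb_other j k : k <> j -> eb j k = C0.
Proof. intros. unfold eb. apply Nat.eqb_neq in H. rewrite H. auto. Qed.

Lemma eb_same j : eb j j = C1.
Proof. unfold eb. rewrite Nat.eqb_refl. auto. Qed.

Lemma sum_sq_eb j n : sum_f_R0 (sq (eb j)) n = if Nat.leb j n then 1 else 0.
Proof.
  induction n; simpl.
  - unfold sq, eb. destruct j; simpl; unfold Cnorm2, C1, C0; simpl; ring.
  - rewrite IHn. unfold sq, eb. destruct (Nat.eqb (S n) j) eqn:E.
    + apply Nat.eqb_eq in E. subst. rewrite Nat.leb_refl.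
      replace (Nat.leb (S n) n) with false by (symmetry; apply Nat.leb_gt; lia).
      unfold Cnorm2, C1; simpl; ring.
    + apply Nat.eqb_neq in E. unfold Cnorm2, C0; simpl.
      destruct (Nat.leb j n) eqn:E1, (Nat.leb j (S n)) eqn:E2; try ring;
        [apply Nat.leb_le in E1; apply Nat.leb_gt in E2 | apply Nat.leb_gt in E1; apply Nat.leb_le in E2]; lia.
Qed.

Lemma vnorm_le_eb j : vnorm_le (eb j) 1.
Proof.
  split. lra. intro n. change (sum_f_R0 (sq (eb j)) n <= 1 * 1).
  rewrite sum_sq_eb. destruct (Nat.leb j n); lra.
Qed.

Lemma l2_eb j : l2 (eb j).
Proof. exists 1. apply vnorm_le_eb. Qed.

Lemma nrm2_eb k : nrm2 (eb k) = 1.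
Proof.
  unfold nrm2. rewrite (Series_single _ k).
  - unfold sq. rewrite eb_same. unfold Cnorm2, C1; simpl; ring.
  - intros. unfold sq. rewrite eb_other by auto. unfold Cnorm2, C0; simpl; ring.
Qed.

(* [ip x y] is linear in [x] and conjugate-linear in [y]. *)
Definition ipim (x y : vec) : nat -> R := fun k => snd (x k) * fst (y k) - fst (x k) * snd (y k).
Definition ip (x y : vec) : C := (Series (cross x y), Series (ipim x y)).

Lemma ex_series_cross_ipim x y : l2 x -> l2 y -> ex_series (cross x y) /\ ex_series (ipim x y).
Proof.
  intros Hx Hy.
  assert (Hs : ex_series (fun k => sq x k + sq y k))
    by (apply (ex_series_plus (sq x) (sq y)); apply ex_series_sq; auto).
  split; [apply (ex_series_le (cross x y) (fun k => sq x k + sq y k))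
         | apply (ex_series_le (ipim x y) (fun k => sq x k + sq y k))]; auto; intro k;
    unfold cross, ipim, sq, Cnorm2; destruct (x k) as [a b], (y k) as [c e]; simpl;
    pose proof (Rle_0_sqr (a-c)); pose proof (Rle_0_sqr (a+c)); pose proof (Rle_0_sqr (b-e));
    pose proof (Rle_0_sqr (b+e)); pose proof (Rle_0_sqr (b-c)); pose proof (Rle_0_sqr (b+c));
    pose proof (Rle_0_sqr (a-e)); pose proof (Rle_0_sqr (a+e)); unfold Rsqr in *;
    apply Rabs_le; split; nra.
Qed.

Lemma ip_add_l x y z : l2 x -> l2 y -> l2 z -> ip (vadd x y) z = Cadd (ip x z) (ip y z).
Proof.
  intros Hx Hy Hz. destruct (ex_series_cross_ipim x z) as [Hx1 Hx2]; auto.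
  destruct (ex_series_cross_ipim y z) as [Hy1 Hy2]; auto.
  unfold ip, Cadd; apply C_ext; simpl; rewrite <- Series_plus by auto; apply Series_ext; intro k;
    unfold cross, ipim, vadd, Cadd; simpl; ring.
Qed.

Lemma ip_scale_l a x z : l2 x -> l2 z -> ip (vscale a x) z = Cmul a (ip x z).
Proof.
  intros Hx Hz. destruct (ex_series_cross_ipim x z) as [H1 H2]; auto. unfold ip, Cmul; apply C_ext; simpl.
  - replace (fst a * Series (cross x z) - snd a * Series (ipim x z)) with
      (fst a * Series (cross x z) + (- snd a) * Series (ipim x z)) by ring.
    rewrite <- Series_lin2 by auto. apply Series_ext; intro k. unfold cross, ipim, vscale, Cmul; simpl; ring.
  - rewrite <- Series_lin2 by auto. apply Series_ext; intro k. unfold cross, ipim, vscale, Cmul; simpl; ring.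
Qed.

Lemma ip_conj x y : ip y x = Cconj (ip x y).
Proof.
  unfold ip, Cconj. apply C_ext; simpl.
  - apply Series_ext; intro k; unfold cross; ring.
  - rewrite <- Series_opp. apply Series_ext; intro k; unfold ipim; ring.
Qed.

Lemma ip_self x : ip x x = (nrm2 x, 0).
Proof.
  unfold ip, nrm2. apply C_ext; simpl.
  - apply Series_ext; intro k; unfold cross, sq, Cnorm2; ring.
  - rewrite <- Series_zero. apply Series_ext; intro k; unfold ipim; ring.
Qed.

Lemma ip_eb_r x k : ip x (eb k) = x k.
Proof.
  unfold ip. apply C_ext; simpl; rewrite (Series_single _ k);
    try (unfold cross, ipim; rewrite eb_same; unfold C1; simpl; ring);
    intros m Hm; unfold cross, ipim; rewrite eb_other by auto; unfold C0; simpl; ring.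
Qed.

Lemma ip_eb_l x k : ip (eb k) x = Cconj (x k).
Proof. rewrite ip_conj, ip_eb_r. auto. Qed.

Lemma ip_scale_r a x z : l2 x -> l2 z -> ip z (vscale a x) = Cmul (Cconj a) (ip z x).
Proof. intros. rewrite !(ip_conj _ z), ip_scale_l; auto. unfold Cconj, Cmul; Cring. Qed.

Lemma ip_sub_l x y z : l2 x -> l2 y -> l2 z -> ip (vsub x y) z = Cadd (ip x z) (Copp (ip y z)).
Proof.
  intros. rewrite vsub_vadd, ip_add_l, ip_scale_l; auto using l2_vscale.
  unfold Cadd, Copp, Cmul, C1; Cring.
Qed.

Lemma ip_sub_r x y z : l2 x -> l2 y -> l2 z -> ip z (vsub x y) = Cadd (ip z x) (Copp (ip z y)).
Proof.
  intros. rewrite (ip_conj _ z), ip_sub_l, (ip_conj z), (ip_conj z); auto.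
  unfold Cadd, Copp, Cconj; Cring.
Qed.

Lemma ip_ext_l x x' y : (forall k, x k = x' k) -> ip x y = ip x' y.
Proof. intros. replace x' with x; auto. apply functional_extensionality; auto. Qed.

Lemma ip_ext_r x y y' : (forall k, y k = y' k) -> ip x y = ip x y'.
Proof. intros. replace y' with y; auto. apply functional_extensionality; auto. Qed.

Fixpoint csum (n : nat) (a : nat -> C) : C :=
  match n with O => C0 | S n => Cadd (csum n a) (a n) end.

Fixpoint rsum (n : nat) (a : nat -> R) : R :=
  match n with O => 0 | S n => rsum n a + a n end.

Lemma csum_ext n a b : (forall i, (i < n)%nat -> a i = b i) -> csum n a = csum n b.
Proof. revert a b; induction n; simpl; intros; auto. rewrite (IHn a b), H; auto. Qed.

Lemma csum_add n a b : csum n (fun i => Cadd (a i) (b i)) = Cadd (csum n a) (csum n b).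
Proof. induction n; simpl; [|rewrite IHn]; unfold Cadd, C0; Cring. Qed.

Lemma csum_mul n c a : csum n (fun i => Cmul c (a i)) = Cmul c (csum n a).
Proof. induction n; simpl; [|rewrite IHn]; unfold Cadd, Cmul, C0; Cring. Qed.

Lemma csum_conj n a : csum n (fun i => Cconj (a i)) = Cconj (csum n a).
Proof. induction n; simpl; [|rewrite IHn]; unfold Cadd, Cconj, C0; Cring. Qed.

Lemma csum_zero n a : (forall i, (i < n)%nat -> a i = C0) -> csum n a = C0.
Proof. induction n; simpl; intros; auto. rewrite IHn, H; auto. unfold Cadd, C0; Cring. Qed.

Lemma csum_single n a j : (j < n)%nat -> (forall i, (i < n)%nat -> i <> j -> a i = C0) -> csum n a = a j.
Proof.
  induction n; simpl; intros. lia.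
  destruct (Nat.eq_dec j n).
  - subst. rewrite csum_zero by (intros; apply H0; lia). unfold Cadd, C0; Cring.
  - rewrite IHn, (H0 n); try lia. unfold Cadd, C0; Cring. intros; apply H0; lia.
Qed.

Lemma csum_pad n m a : (n <= m)%nat -> (forall i, (n <= i < m)%nat -> a i = C0) -> csum m a = csum n a.
Proof.
  intros H. induction H; intros H0. auto. simpl. rewrite (H0 m), IHle.
  - unfold Cadd, C0; Cring.
  - intros; apply H0; lia.
  - lia.
Qed.

Lemma csum_real n b : csum n (fun i => (b i, 0)) = (rsum n b, 0).
Proof. induction n; simpl. reflexivity. rewrite IHn. unfold Cadd; Cring. Qed.

Lemma rsum_nonneg n a : (forall i, (i < n)%nat -> 0 <= a i) -> 0 <= rsum n a.
Proof. induction n; simpl; intros. lra. pose proof (H n ltac:(lia)). pose proof (IHn ltac:(auto)). lra. Qed.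

Lemma rsum_ext n a b : (forall i, (i < n)%nat -> a i = b i) -> rsum n a = rsum n b.
Proof. revert a b; induction n; simpl; intros; auto. rewrite (IHn a b), H; auto. Qed.

Lemma rsum_le n a b : (forall i, (i < n)%nat -> a i <= b i) -> rsum n a <= rsum n b.
Proof. induction n; simpl; intros. lra. pose proof (H n ltac:(lia)). pose proof (IHn ltac:(auto)). lra. Qed.

Lemma rsum_S_sum_f_R0 n a : rsum (S n) a = sum_f_R0 a n.
Proof. induction n; simpl; [ring|]. simpl in IHn. rewrite <- IHn. auto. Qed.

Lemma rsum_sum_f_R0_swap r K (a : nat -> nat -> R) :
  rsum r (fun i => sum_f_R0 (a i) K) = sum_f_R0 (fun k => rsum r (fun i => a i k)) K.
Proof. induction r; simpl. rewrite sum_eq_R0; auto. rewrite IHr, <- sum_plus. auto. Qed.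

Definition comb (r : nat) (a : nat -> C) (f : nat -> vec) : vec :=
  fun k => csum r (fun i => Cmul (a i) (f i k)).

Lemma comb_S r a f : comb (S r) a f = vadd (comb r a f) (vscale (a r) (f r)).
Proof. reflexivity. Qed.

Lemma comb_ext_f r a f f' : (forall i, (i < r)%nat -> f i = f' i) -> forall k, comb r a f k = comb r a f' k.
Proof. intros. apply csum_ext; intros. rewrite H; auto. Qed.

Lemma l2_comb r a f : (forall i, (i < r)%nat -> l2 (f i)) -> l2 (comb r a f).
Proof.
  induction r; intros.
  - replace (comb 0 a f) with vzero by reflexivity. apply l2_vzero.
  - rewrite comb_S. apply l2_vadd; [apply IHr | apply l2_vscale]; auto.
Qed.

Lemma ip_comb_l r a f z : (forall i, (i < r)%nat -> l2 (f i)) -> l2 z ->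
  ip (comb r a f) z = csum r (fun i => Cmul (a i) (ip (f i) z)).
Proof.
  induction r; intros.
  - replace (comb 0 a f) with (vscale C0 vzero) by
      (apply functional_extensionality; intro; unfold vscale, vzero, Cmul, C0; Cring).
    rewrite ip_scale_l by auto using l2_vzero. unfold Cmul, C0; Cring.
  - rewrite comb_S, ip_add_l, ip_scale_l, IHr by auto using l2_comb, l2_vscale. reflexivity.
Qed.

Lemma ip_comb_r r a f z : (forall i, (i < r)%nat -> l2 (f i)) -> l2 z ->
  ip z (comb r a f) = csum r (fun i => Cmul (Cconj (a i)) (ip z (f i))).
Proof.
  intros. rewrite ip_conj, ip_comb_l, <- csum_conj by auto. apply csum_ext; intros.
  rewrite (ip_conj z). unfold Cconj, Cmul; Cring.
Qed.

Lemma comb_eb I x k : comb I x eb k = if Nat.ltb k I then x k else C0.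
Proof.
  unfold comb. destruct (Nat.ltb k I) eqn:E.
  - apply Nat.ltb_lt in E. rewrite (csum_single _ _ k); auto.
    + rewrite eb_same. unfold Cmul, C1; Cring.
    + intros. rewrite eb_other by auto. unfold Cmul, C0; Cring.
  - apply Nat.ltb_ge in E. apply csum_zero. intros. rewrite eb_other by lia. unfold Cmul, C0; Cring.
Qed.

Lemma op_comb T t b h : is_op T -> (forall s, (s < t)%nat -> l2 (h s)) ->
  forall k, T (comb t b h) k = comb t b (fun s => T (h s)) k.
Proof.
  intros [Hlin _]. induction t; intros Hh k.
  - replace (comb 0 b h) with (vadd (vscale (Copp C1) vzero) vzero)
      by (apply functional_extensionality; intro; unfold vadd, vscale, vzero, Cadd, Cmul, Copp, C0, C1; Cring).
    rewrite Hlin by apply l2_vzero. unfold vadd, vscale, comb; simpl. unfold Cadd, Cmul, Copp, C0, C1; Cring.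
  - replace (comb (S t) b h) with (vadd (vscale (b t) (h t)) (comb t b h))
      by (apply functional_extensionality; intro; unfold comb, vadd, vscale; simpl; unfold Cadd; Cring).
    rewrite Hlin by auto using l2_comb. unfold vadd at 1. rewrite IHt by auto.
    unfold vscale, comb; simpl. unfold Cadd; Cring.
Qed.

Definition orthonormal (r : nat) (f : nat -> vec) : Prop :=
  (forall i, (i < r)%nat -> l2 (f i)) /\
  (forall i j, (i < r)%nat -> (j < r)%nat -> ip (f i) (f j) = if Nat.eqb i j then C1 else C0).

Definition proj (r : nat) (f : nat -> vec) (w : vec) : vec := comb r (fun i => ip w (f i)) f.

Lemma l2_proj r f w : (forall i, (i < r)%nat -> l2 (f i)) -> l2 (proj r f w).
Proof. apply l2_comb. Qed.

Lemma orthonormal_nrm2 r f i : orthonormal r f -> (i < r)%nat -> nrm2 (f i) = 1.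
Proof.
  intros. pose proof (ip_self (f i)). rewrite (proj2 H), Nat.eqb_refl in H1 by auto.
  unfold C1 in H1. inversion H1. auto.
Qed.

Lemma ip_comb_orthonormal Rr r a f j : orthonormal Rr f -> (r <= Rr)%nat -> (j < Rr)%nat ->
  ip (comb r a f) (f j) = if Nat.ltb j r then a j else C0.
Proof.
  intros [Hl Ho] HrR HjR. rewrite ip_comb_l by (auto; intros; apply Hl; lia).
  assert (Hterm : forall i, (i < r)%nat -> Cmul (a i) (ip (f i) (f j)) = if Nat.eqb i j then a i else C0).
  { intros. rewrite Ho by lia. destruct (Nat.eqb i j); unfold Cmul, C1, C0; Cring. }
  rewrite (csum_ext _ _ _ Hterm). destruct (Nat.ltb j r) eqn:E.
  - apply Nat.ltb_lt in E. rewrite (csum_single _ _ j), Nat.eqb_refl; auto.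
    intros. apply Nat.eqb_neq in H0. rewrite H0. auto.
  - apply Nat.ltb_ge in E. apply csum_zero. intros.
    replace (Nat.eqb i j) with false by (symmetry; apply Nat.eqb_neq; lia). auto.
Qed.

Lemma nrm2_comb_orthonormal Rr r a f : orthonormal Rr f -> (r <= Rr)%nat ->
  nrm2 (comb r a f) = rsum r (fun i => Cnorm2 (a i)).
Proof.
  intros. pose proof (ip_self (comb r a f)).
  assert (Hf : forall i, (i < r)%nat -> l2 (f i)) by (intros; apply (proj1 H); lia).
  rewrite ip_comb_r in H1 by auto using l2_comb.
  rewrite (csum_ext _ _ (fun i => (Cnorm2 (a i), 0))), csum_real in H1.
  - inversion H1; auto.
  - intros. rewrite (ip_comb_orthonormal Rr) by (auto; lia).
    replace (Nat.ltb i r) with true by (symmetry; apply Nat.ltb_lt; auto). apply Cmul_conj_l.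
Qed.

Lemma bessel Rr r f y : orthonormal Rr f -> (r <= Rr)%nat -> l2 y ->
  rsum r (fun i => Cnorm2 (ip y (f i))) <= nrm2 y.
Proof.
  intros HON HrR Hy.
  assert (Hf : forall i, (i < r)%nat -> l2 (f i)) by (intros; apply (proj1 HON); lia).
  set (p := proj r f y). assert (Hp : l2 p) by (apply l2_proj; auto).
  set (S := rsum r (fun i => Cnorm2 (ip y (f i)))).
  assert (E1 : ip p y = (S, 0)).
  { unfold S, p, proj. rewrite ip_conj, ip_comb_r by auto.
    rewrite (csum_ext _ _ (fun i => (Cnorm2 (ip y (f i)), 0))), csum_real.
    - unfold Cconj; Cring.
    - intros. rewrite (ip_conj (f i) y). unfold Cmul, Cconj, Cnorm2; Cring. }
  assert (E2 : ip y p = (S, 0)) by (rewrite ip_conj, E1; unfold Cconj; Cring).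
  assert (E3 : ip p p = (S, 0))
    by (rewrite ip_self; unfold p, proj; rewrite (nrm2_comb_orthonormal Rr) by auto; reflexivity).
  pose proof (ip_self (vsub y p)).
  rewrite ip_sub_l, !ip_sub_r, E1, E2, E3, ip_self in H by auto using l2_vsub.
  unfold Cadd, Copp in H. inversion H.
  pose proof (nrm2_ge_0 (vsub y p) (l2_vsub _ _ Hy Hp)). lra.
Qed.

(** * Gram-Schmidt orthonormalisation *)

Definition span (t : nat) (g : nat -> vec) (w : vec) : Prop :=
  exists b : nat -> C, forall k, w k = comb t b g k.

Lemma span_ext t g w w' : (forall k, w k = w' k) -> span t g w -> span t g w'.
Proof. intros H [b Hb]. exists b. intro k. rewrite <- H. auto. Qed.

Lemma span_add t g x y : span t g x -> span t g y -> span t g (vadd x y).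
Proof.
  intros [b1 H1] [b2 H2]. exists (fun s => Cadd (b1 s) (b2 s)). intro k.
  unfold vadd. rewrite H1, H2. unfold comb. rewrite <- csum_add. apply csum_ext; intros.
  unfold Cadd, Cmul; Cring.
Qed.

Lemma span_scale t g a x : span t g x -> span t g (vscale a x).
Proof.
  intros [b H]. exists (fun s => Cmul a (b s)). intro k.
  unfold vscale. rewrite H. unfold comb. rewrite <- csum_mul. apply csum_ext; intros. unfold Cmul; Cring.
Qed.

Lemma span_sub t g x y : span t g x -> span t g y -> span t g (vsub x y).
Proof. intros. rewrite vsub_vadd. apply span_add; auto. apply span_scale; auto. Qed.

Lemma span_gen t g s : (s < t)%nat -> span t g (g s).
Proof.
  intros. exists (fun i => if Nat.eqb i s then C1 else C0). intro k. unfold comb.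
  rewrite (csum_single _ _ s), Nat.eqb_refl; auto. unfold Cmul, C1; Cring.
  intros. apply Nat.eqb_neq in H1. rewrite H1. unfold Cmul, C0; Cring.
Qed.

Lemma span_mono t t' g w : (t <= t')%nat -> span t g w -> span t' g w.
Proof.
  intros Ht [b H]. exists (fun s => if Nat.ltb s t then b s else C0). intro k.
  rewrite H. unfold comb. rewrite (csum_pad t t'); auto.
  - apply csum_ext; intros. apply Nat.ltb_lt in H0. rewrite H0. auto.
  - intros. replace (Nat.ltb i t) with false by (symmetry; apply Nat.ltb_ge; lia). unfold Cmul, C0; Cring.
Qed.

Lemma span_comb t g r a h : (forall i, (i < r)%nat -> span t g (h i)) -> span t g (comb r a h).
Proof.
  induction r; intros.
  - exists (fun _ => C0). intro k. unfold comb; simpl. symmetry. apply csum_zero.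
    intros. unfold Cmul, C0; Cring.
  - rewrite comb_S. apply span_add; [apply IHr | apply span_scale]; auto.
Qed.

Definition res (r : nat) (f : nat -> vec) (g : vec) : vec := vsub g (proj r f g).
Definition normz (x : vec) : vec := vscale (/ sqrt (nrm2 x), 0) x.
Definition upd (f : nat -> vec) (r : nat) (h : vec) : nat -> vec :=
  fun i => if Nat.eqb i r then h else f i.

Definition gs_step (st : nat * (nat -> vec)) (g : vec) : nat * (nat -> vec) :=
  let (r, f) := st in
  if Req_EM_T (nrm2 (res r f g)) 0 then (r, f) else (S r, upd f r (normz (res r f g))).

Fixpoint gram_schmidt (g : nat -> vec) (t : nat) : nat * (nat -> vec) :=
  match t with O => (O, fun _ => vzero) | S t => gs_step (gram_schmidt g t) (g t) end.

Lemma l2_res r f g : (forall i, (i < r)%nat -> l2 (f i)) -> l2 g -> l2 (res r f g).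
Proof. intros. apply l2_vsub, l2_proj; auto. Qed.

Lemma ip_res_orthonormal r f g j : orthonormal r f -> (j < r)%nat -> l2 g -> ip (res r f g) (f j) = C0.
Proof.
  intros HON Hj Hg. assert (Hf : forall i, (i < r)%nat -> l2 (f i)) by apply HON.
  unfold res. rewrite ip_sub_l by auto using l2_proj. unfold proj. rewrite (ip_comb_orthonormal r) by auto.
  replace (Nat.ltb j r) with true by (symmetry; apply Nat.ltb_lt; auto). unfold Cadd, Copp, C0; Cring.
Qed.

Lemma normz_spec x : l2 x -> 0 < nrm2 x ->
  l2 (normz x) /\ ip (normz x) (normz x) = C1 /\ x = vscale (sqrt (nrm2 x), 0) (normz x).
Proof.
  intros Hx Hpos. assert (Hs : 0 < sqrt (nrm2 x)) by (apply sqrt_lt_R0; auto).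
  pose proof (sqrt_sqrt (nrm2 x) ltac:(lra)) as Hss.
  split; [|split].
  - apply l2_vscale; auto.
  - unfold normz. rewrite ip_scale_l, ip_scale_r, ip_self by auto using l2_vscale.
    unfold Cmul, Cconj, C1; apply C_ext; simpl; [|ring].
    rewrite <- Hss at 3. field. lra.
  - apply functional_extensionality; intro k. unfold normz, vscale, Cmul; apply C_ext; simpl; field; lra.
Qed.

Lemma normz_unit x : nrm2 x = 1 -> normz x = x.
Proof.
  intros. apply functional_extensionality; intro. unfold normz, vscale. rewrite H, sqrt_1, Rinv_1.
  unfold Cmul; Cring.
Qed.

Lemma orthonormal_upd r f h : orthonormal r f -> l2 h -> ip h h = C1 -> (forall j, (j < r)%nat -> ip h (f j) = C0) ->
  orthonormal (S r) (upd f r h).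
Proof.
  intros [Hl Ho] Hh Hhh Horth. unfold upd. split.
  - intros i Hi. destruct (Nat.eqb i r) eqn:E; auto. apply Nat.eqb_neq in E. apply Hl. lia.
  - intros i j Hi Hj.
    destruct (Nat.eq_dec i r) as [->|Ei], (Nat.eq_dec j r) as [->|Ej];
      repeat rewrite ?Nat.eqb_refl, ?(proj2 (Nat.eqb_neq _ _) Ei), ?(proj2 (Nat.eqb_neq _ _) Ej),
        ?(proj2 (Nat.eqb_neq _ _) (not_eq_sym Ei)), ?(proj2 (Nat.eqb_neq _ _) (not_eq_sym Ej)).
    + auto.
    + apply Horth. lia.
    + rewrite ip_conj, Horth by lia. unfold Cconj, C0; Cring.
    + apply Ho; lia.
Qed.

Lemma proj_upd r f h w k : proj (S r) (upd f r h) w k = Cadd (proj r f w k) (Cmul (ip w h) (h k)).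
Proof.
  unfold proj. rewrite comb_S. unfold vadd, vscale.
  replace (upd f r h r) with h by (unfold upd; rewrite Nat.eqb_refl; auto). f_equal.
  apply csum_ext. intros. unfold upd. replace (Nat.eqb i r) with false by (symmetry; apply Nat.eqb_neq; lia).
  auto.
Qed.

Section GramSchmidt.
Variable g : nat -> vec.
Hypothesis Hg : forall s, l2 (g s).

Definition gs_invariant (t r : nat) (f : nat -> vec) : Prop :=
  (r <= t)%nat /\ orthonormal r f /\
  (forall s, (s < t)%nat -> forall k, g s k = proj r f (g s) k) /\
  (forall i, (i < r)%nat -> span t g (f i)).

(* The new vector [h = res / ||res||] is orthogonal to the old ones and [<g_t, h> = ||res||],
   so [g_t = proj_f g_t + ||res|| h] lies in the enlarged span. *)
Lemma gs_step_invariant t r f : gs_invariant t r f ->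
  let st := gs_step (r, f) (g t) in gs_invariant (S t) (fst st) (snd st).
Proof.
  intros [Hle [HON [Hproj Hspan]]]. simpl.
  assert (Hf : forall i, (i < r)%nat -> l2 (f i)) by apply HON.
  set (rv := res r f (g t)). assert (Hrv : l2 rv) by (apply l2_res; auto).
  assert (Hgt : forall k, g t k = vadd (proj r f (g t)) rv k)
    by (intro; unfold vadd, rv, res, vsub, Cadd, Copp; Cring).
  destruct (Req_EM_T (nrm2 rv) 0) as [E|E]; simpl; (split; [lia|]).
  - split; auto. split.
    + intros s Hs k. destruct (Nat.eq_dec s t); [subst s | apply Hproj; lia].
      rewrite Hgt. unfold vadd. rewrite (nrm2_eq_0 _ Hrv E). unfold Cadd, C0; Cring.
    + intros. apply (span_mono t); auto.
  - assert (Hpos : 0 < nrm2 rv) by (pose proof (nrm2_ge_0 rv Hrv); lra).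
    destruct (normz_spec rv Hrv Hpos) as [Hl2h [Hhh Hrvh]]. set (h := normz rv) in *.
    assert (Horth : forall j, (j < r)%nat -> ip h (f j) = C0).
    { intros. unfold h, normz. rewrite ip_scale_l by auto. unfold rv. rewrite ip_res_orthonormal by auto.
      unfold Cmul, C0; Cring. }
    assert (Hproj_orth : forall w, ip (proj r f w) h = C0).
    { intros. unfold proj. rewrite ip_comb_l by auto. apply csum_zero. intros.
      rewrite (ip_conj h (f i)), Horth by auto. unfold Cmul, Cconj, C0; Cring. }
    split; [apply orthonormal_upd; auto | split].
    + intros s Hs k. rewrite proj_upd. destruct (Nat.eq_dec s t).
      * subst s. rewrite (ip_ext_l _ _ _ Hgt), ip_add_l, Hproj_orth by auto using l2_proj.
        assert (Hrvk : forall k, rv k = Cmul (sqrt (nrm2 rv), 0) (h k)) 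
          by (intro k0; transitivity (vscale (sqrt (nrm2 rv), 0) h k0); [now rewrite <- Hrvh | reflexivity]).
        rewrite (ip_ext_l _ (vscale (sqrt (nrm2 rv), 0) h) _ Hrvk), ip_scale_l, Hhh by auto.
        rewrite Hgt. unfold vadd. rewrite Hrvk. unfold vscale, Cadd, Cmul, C0, C1; Cring.
      * rewrite (ip_ext_l _ _ _ (Hproj s ltac:(lia))), Hproj_orth, <- (Hproj s) by lia.
        unfold Cadd, Cmul, C0; Cring.
    + intros i Hi. unfold upd. destruct (Nat.eqb i r) eqn:Ei.
      * unfold h, normz, rv, res. apply span_scale, span_sub. apply span_gen; lia.
        apply span_comb. intros. apply (span_mono t); auto.
      * apply Nat.eqb_neq in Ei. apply (span_mono t); [lia | apply Hspan; lia].
Qed.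

Lemma gram_schmidt_invariant t :
  gs_invariant t (fst (gram_schmidt g t)) (snd (gram_schmidt g t)).
Proof.
  induction t.
  - split; [|split; [split|split]]; simpl; intros; lia.
  - simpl. destruct (gram_schmidt g t) as [r f]. apply gs_step_invariant. auto.
Qed.

Lemma gram_schmidt_mono t t' : (t <= t')%nat ->
  (fst (gram_schmidt g t) <= fst (gram_schmidt g t'))%nat /\
  forall i, (i < fst (gram_schmidt g t))%nat -> snd (gram_schmidt g t') i = snd (gram_schmidt g t) i.
Proof.
  intros H. induction H. auto. destruct IHle as [IH1 IH2]. simpl.
  destruct (gram_schmidt g m) as [r f]. unfold gs_step.
  destruct (Req_EM_T _ _); simpl in *; split; auto; try lia.
  intros. unfold upd. replace (Nat.eqb i r) with false by (symmetry; apply Nat.eqb_neq; lia). auto.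
Qed.

End GramSchmidt.

(** * Orthonormal bases of [l^2] and the unitaries they define *)

(* Counting dimensions: [sum_(k <= K) ||e_k||^2 = sum_(i < r) sum_(k <= K) |f_i k|^2 <= r]. *)
Lemma orthonormal_card_ge r f K : orthonormal r f ->
  (forall k, (k <= K)%nat -> forall m, eb k m = proj r f (eb k) m) -> (S K <= r)%nat.
Proof.
  intros HON Hexp. apply INR_le.
  assert (Hf : forall i, (i < r)%nat -> l2 (f i)) by apply HON.
  assert (E : forall k, (k <= K)%nat -> 1 = rsum r (fun i => Cnorm2 (f i k))).
  { intros. rewrite <- (nrm2_eb k), (nrm2_ext _ _ (Hexp k H)). unfold proj. rewrite (nrm2_comb_orthonormal r) by auto.
    apply rsum_ext. intros. rewrite ip_eb_l, Cnorm2_conj. auto. }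
  replace (INR (S K)) with (sum_f_R0 (fun _ => 1) K)
    by (induction K; [reflexivity | rewrite S_INR; simpl; rewrite IHK by auto; reflexivity]).
  replace (INR r) with (rsum r (fun _ => 1)) by (clear; induction r; [reflexivity | rewrite S_INR; simpl; lra]).
  rewrite (sum_eq _ _ K E) by auto. rewrite <- rsum_sum_f_R0_swap. apply rsum_le. intros.
  pose proof (sum_sq_le_nrm2 (f i) (Hf i H) K). rewrite (orthonormal_nrm2 r f i) in H0 by auto. exact H0.
Qed.

Definition gs_rank (g : nat -> vec) (t : nat) : nat := fst (gram_schmidt g t).
Definition gs_vec (g : nat -> vec) (t : nat) : nat -> vec := snd (gram_schmidt g t).

Section OrthonormalBasis.
Variable g : nat -> vec.
Hypothesis Hg : forall s, l2 (g s).
Variable tau : nat -> nat.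
Hypothesis Htau_mono : forall j k, (j <= k)%nat -> (tau j <= tau k)%nat.
Hypothesis Htau_eb : forall k, exists s, (s < tau k)%nat /\ forall m, g s m = eb k m.


(* Gram-Schmidt never changes a vector once produced, so [onb i] is the [i]-th vector
   of any stage that has produced it; stage [tau i] has produced at least [i + 1]. *)
Definition onb (i : nat) : vec := gs_vec g (tau i) i.

Lemma eb_proj_gs k t : (tau k <= t)%nat -> forall m, eb k m = proj (gs_rank g t) (gs_vec g t) (eb k) m.
Proof.
  intros. destruct (Htau_eb k) as [s [Hs Hse]].
  destruct (gram_schmidt_invariant g Hg t) as [_ [_ [Hp _]]].
  replace (eb k) with (g s) by (apply functional_extensionality; auto).
  apply Hp. lia.
Qed.

Lemma gs_rank_tau k : (S k <= gs_rank g (tau k))%nat.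
Proof.
  apply (orthonormal_card_ge _ (gs_vec g (tau k))). apply (gram_schmidt_invariant g Hg).
  intros. apply eb_proj_gs. auto.
Qed.

Lemma gs_rank_le t : (gs_rank g t <= t)%nat.
Proof. apply (gram_schmidt_invariant g Hg). Qed.

Lemma onb_stable t i : (i < gs_rank g t)%nat -> onb i = gs_vec g t i.
Proof.
  intros. unfold onb. set (T := Nat.max t (tau i)).
  destruct (gram_schmidt_mono g t T ltac:(lia)) as [_ H1].
  destruct (gram_schmidt_mono g (tau i) T ltac:(lia)) as [_ H2].
  pose proof (gs_rank_tau i). unfold gs_vec, gs_rank in *.
  rewrite <- (H1 i), <- (H2 i) by lia. auto.
Qed.

Lemma orthonormal_onb n : orthonormal n onb.
Proof.
  assert (Hstage : forall t, orthonormal (gs_rank g t) (gs_vec g t)) by apply (gram_schmidt_invariant g Hg).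
  split.
  - intros. pose proof (gs_rank_tau i). rewrite (onb_stable (tau i) i) by lia. apply Hstage. lia.
  - intros. pose proof (gs_rank_tau (Nat.max i j)).
    rewrite (onb_stable (tau (Nat.max i j)) i), (onb_stable (tau (Nat.max i j)) j) by lia.
    apply Hstage; lia.
Qed.

Lemma l2_onb i : l2 (onb i).
Proof. apply (proj1 (orthonormal_onb (S i))). lia. Qed.

Lemma ip_gs_onb t s m : (gs_rank g t <= m)%nat -> (s < t)%nat -> ip (g s) (onb m) = C0.
Proof.
  intros Hm Hs. destruct (gram_schmidt_invariant g Hg t) as [_ [HON [Hp _]]].
  rewrite (ip_ext_l _ _ _ (Hp s Hs)). unfold proj.
  rewrite (ip_ext_l _ (comb (gs_rank g t) (fun i => ip (g s) (gs_vec g t i)) onb))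
    by (apply comb_ext_f; intros; symmetry; apply onb_stable; auto).
  rewrite (ip_comb_orthonormal (S m)) by (auto using orthonormal_onb; lia).
  replace (Nat.ltb m (gs_rank g t)) with false by (symmetry; apply Nat.ltb_ge; auto). auto.
Qed.

Lemma span_orth_onb t w : span t g w -> forall m, (gs_rank g t <= m)%nat -> ip w (onb m) = C0.
Proof.
  intros [b Hb] m Hm. rewrite (ip_ext_l _ _ _ Hb), ip_comb_l by auto using l2_onb.
  apply csum_zero. intros s Hs. rewrite (ip_gs_onb t) by auto. unfold Cmul, C0; Cring.
Qed.

Lemma onb_support k i : (gs_rank g (tau k) <= i)%nat -> onb i k = C0.
Proof.
  intros. rewrite <- ip_eb_r, ip_conj. destruct (Htau_eb k) as [s [Hs Hse]].
  rewrite (ip_ext_l _ (g s)) by (intro; symmetry; auto).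
  rewrite (ip_gs_onb (tau k) s i) by auto. unfold Cconj, C0; Cring.
Qed.

Lemma onb_support_tau k i : (tau k <= i)%nat -> onb i k = C0.
Proof. intros. apply onb_support. exact (Nat.le_trans _ _ _ (gs_rank_le (tau k)) H). Qed.

Lemma eb_expansion k m : eb k m = comb (tau k) (fun i => ip (eb k) (onb i)) onb m.
Proof.
  rewrite (eb_proj_gs k (tau k) (le_n _)). unfold proj.
  pose proof (gs_rank_le (tau k)). unfold comb.
  rewrite (csum_pad (gs_rank g (tau k)) (tau k)); auto.
  - apply csum_ext. intros. rewrite (onb_stable (tau k) i); auto.
  - intros i Hi. rewrite ip_eb_l, onb_support by apply Hi. unfold Cmul, Cconj, C0; Cring.
Qed.

Lemma onb_0 : nrm2 (g 0%nat) = 1 -> onb 0 = g 0%nat.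
Proof.
  intros Hn.
  assert (Hres : res 0 (fun _ => vzero) (g 0%nat) = g 0%nat)
    by (apply functional_extensionality; intro i; unfold res, vsub, proj, comb; simpl; unfold Cadd, Copp, C0; Cring).
  assert (Hstep : gram_schmidt g 1 = (1%nat, upd (fun _ => vzero) 0 (g 0%nat))).
  { simpl. rewrite Hres, Hn. destruct (Req_EM_T 1 0); [lra|]. rewrite normz_unit; auto. }
  rewrite (onb_stable 1 0); unfold gs_vec, gs_rank; rewrite Hstep; auto.
Qed.

End OrthonormalBasis.

Definition vtrunc (I : nat) (x : vec) : vec := fun i => if Nat.ltb i I then x i else C0.

Lemma vtrunc_ge I x i : (I <= i)%nat -> vtrunc I x i = C0.
Proof. intros. unfold vtrunc. replace (Nat.ltb i I) with false by (symmetry; apply Nat.ltb_ge; auto). auto. Qed.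

Lemma vtrunc_lt I x i : (i < I)%nat -> vtrunc I x i = x i.
Proof. intros. unfold vtrunc. replace (Nat.ltb i I) with true by (symmetry; apply Nat.ltb_lt; auto). auto. Qed.

Lemma l2_trunc I x : l2 x -> l2 (vtrunc I x).
Proof.
  intros [r [Hr H]]. exists r. split; auto. intro n. eapply Rle_trans. 2: apply (H n).
  apply sum_Rle. intros k _. unfold vtrunc. destruct (Nat.ltb k I). lra.
  pose proof (Cnorm2_ge_0 (x k)). unfold Cnorm2, C0 in *; simpl in *. lra.
Qed.

Lemma sum_f_R0_tail (a : nat -> R) N n :
  sum_f_R0 (fun k => if Nat.ltb k (S N) then 0 else a k) n = sum_f_R0 a n - sum_f_R0 a (Nat.min n N).
Proof.
  induction n.
  - simpl. replace (Nat.ltb 0 (S N)) with true by (symmetry; apply Nat.ltb_lt; lia). ring.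
  - simpl sum_f_R0 at 1 2. rewrite IHn. destruct (Nat.le_gt_cases (S n) N).
    + replace (Nat.min (S n) N) with (S n) by lia. replace (Nat.min n N) with n by lia.
      replace (Nat.ltb (S n) (S N)) with true by (symmetry; apply Nat.ltb_lt; lia). simpl. ring.
    + replace (Nat.min (S n) N) with N by lia. replace (Nat.min n N) with N by lia.
      replace (Nat.ltb (S n) (S N)) with false by (symmetry; apply Nat.ltb_ge; lia). ring.
Qed.

Lemma nrm2_tail_small x : l2 x -> forall eps, 0 < eps -> exists I, forall I', (I <= I')%nat ->
  nrm2 (vsub x (vtrunc I' x)) <= eps.
Proof.
  intros Hx eps He.
  destruct (Un_cv_Series _ (ex_series_sq x Hx) eps He) as [N HN]. exists (S N). intros I' HI.
  destruct I' as [|N']. lia.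
  assert (HN' := HN N' ltac:(lia)). unfold R_dist in HN'.
  assert (Hle := sum_sq_le_nrm2 x Hx N'). fold (nrm2 x) in HN'. rewrite Rabs_left1 in HN' by lra.
  apply l2_of_sum_sq_bounded. intro n.
  rewrite (sum_eq _ (fun k => if Nat.ltb k (S N') then 0 else sq x k))
    by (intros k _; unfold sq, vsub, vtrunc; destruct (Nat.ltb k (S N')); unfold Cnorm2, Cadd, Copp, C0; simpl; ring).
  rewrite sum_f_R0_tail. destruct (Nat.le_gt_cases N' n).
  - replace (Nat.min n N') with N' by lia. pose proof (sum_sq_le_nrm2 x Hx n). lra.
  - replace (Nat.min n N') with n by lia. lra.
Qed.
Lemma Cnorm2_arbitrarily_small (z : C) : (forall eps, 0 < eps -> Cnorm2 z <= eps) -> z = C0.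
Proof.
  intros H. apply Cnorm2_eq_0, Rle_antisym; [|apply Cnorm2_ge_0].
  apply Rnot_lt_le. intro. specialize (H (Cnorm2 z / 2) ltac:(lra)). lra.
Qed.

(* The hypotheses make [F] an orthonormal basis, and [synth x = sum_i x_i F_i] is a finite
   sum in each coordinate. *)
Section Synthesis.
Variable F : nat -> vec.
Variable tau : nat -> nat.
Hypothesis Htau_mono : forall j k, (j <= k)%nat -> (tau j <= tau k)%nat.
Hypothesis HON : forall n, orthonormal n F.
Hypothesis Hsupp : forall k i, (tau k <= i)%nat -> F i k = C0.
Hypothesis Hexp : forall k m, eb k m = comb (tau k) (fun i => ip (eb k) (F i)) F m.

Definition synth (x : vec) : vec := fun k => csum (tau k) (fun i => Cmul (x i) (F i k)).
Definition analysis (y : vec) : vec := fun j => ip y (F j).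
(* Outside [l^2] the unitary is taken to be the identity, so that it preserves
   non-membership in [l^2] as [is_unitary] requires. *)
Definition synth_op (x : vec) : vec := if excluded_middle_informative (l2 x) then synth x else x.

Lemma l2_F i : l2 (F i).
Proof. apply (proj1 (HON (S i))). lia. Qed.

Lemma synth_finite x I : (forall i, (I <= i)%nat -> x i = C0) -> forall k, synth x k = comb I x F k.
Proof.
  intros. unfold synth, comb. set (M := Nat.max I (tau k)).
  rewrite <- (csum_pad (tau k) M), <- (csum_pad I M); auto; try lia.
  - intros. rewrite H by lia. unfold Cmul, C0; Cring.
  - intros. rewrite Hsupp by lia. unfold Cmul, C0; Cring.
Qed.

Lemma synth_ext x y : (forall i, x i = y i) -> forall k, synth x k = synth y k.
Proof. intros. apply csum_ext. intros; rewrite H; auto. Qed.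

Lemma synth_linear a x y k : synth (vadd (vscale a x) y) k = vadd (vscale a (synth x)) (synth y) k.
Proof.
  unfold synth, vadd, vscale. rewrite <- csum_mul, <- csum_add. apply csum_ext; intros.
  unfold Cmul, Cadd; Cring.
Qed.

Lemma synth_finite_nrm2 x I : (forall i, (I <= i)%nat -> x i = C0) ->
  l2 (synth x) /\ nrm2 (synth x) = rsum I (fun i => Cnorm2 (x i)).
Proof.
  intros. replace (synth x) with (comb I x F) by (symmetry; apply functional_extensionality, synth_finite; auto).
  split. apply l2_comb. intros; apply l2_F. apply (nrm2_comb_orthonormal I); auto.
Qed.

(* The first [K + 1] coordinates of [synth x] only involve [x_i] for [i < tau K]. *)
Lemma synth_vnorm_le x r : vnorm_le x r -> vnorm_le (synth x) r.
Proof.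
  intros [Hr Hx]. split; auto. intro K. set (I := tau K).
  destruct (synth_finite_nrm2 (vtrunc I x) I (vtrunc_ge I x)) as [Hl Hn].
  change (sum_f_R0 (sq (synth x)) K <= r * r).
  rewrite (sum_eq _ (sq (synth (vtrunc I x)))).
  - eapply Rle_trans. apply sum_sq_le_nrm2; auto. rewrite Hn.
    rewrite (rsum_ext _ _ (fun i => Cnorm2 (x i))) by (intros; rewrite vtrunc_lt; auto).
    destruct I. simpl. nra. rewrite rsum_S_sum_f_R0. apply Hx.
  - intros k Hk. unfold sq. f_equal. apply csum_ext. intros. rewrite vtrunc_lt; auto.
    pose proof (Htau_mono k K Hk). lia.
Qed.

Lemma l2_synth x : l2 x -> l2 (synth x).
Proof. intros [r Hr]. exists r. apply synth_vnorm_le; auto. Qed.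

Lemma nrm2_synth_le x : l2 x -> nrm2 (synth x) <= nrm2 x.
Proof.
  intros Hx. pose proof (synth_vnorm_le _ _ (vnorm_le_sqrt_nrm2 x Hx)).
  apply vnorm_le_nrm2 in H; [|apply l2_synth; auto]. destruct H.
  rewrite sqrt_sqrt in H0; auto. apply nrm2_ge_0; auto.
Qed.

Lemma analysis_vnorm_le y r : vnorm_le y r -> vnorm_le (analysis y) r.
Proof.
  intros Hy. pose proof (l2_of_vnorm_le _ _ Hy) as Hl.
  destruct (proj1 (vnorm_le_nrm2 _ _ Hl) Hy) as [Hr Hn].
  split; auto. intro n. unfold analysis. rewrite <- rsum_S_sum_f_R0.
  eapply Rle_trans. apply (bessel (S n)); auto. auto.
Qed.

Lemma l2_analysis y : l2 y -> l2 (analysis y).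
Proof. intros [r Hr]. exists r. apply analysis_vnorm_le; auto. Qed.

(* Split [x = vtrunc I x + w] with [||w||] small: the finite part is reproduced exactly,
   and by Bessel the error is at most [||synth w||^2 <= ||w||^2]. *)
Lemma analysis_synth x : l2 x -> forall j, ip (synth x) (F j) = x j.
Proof.
  intros Hx j.
  enough (Cadd (ip (synth x) (F j)) (Copp (x j)) = C0) as E.
  { destruct (ip (synth x) (F j)), (x j). unfold Cadd, Copp, C0 in E. injection E as E1 E2.
    apply C_ext; simpl in *; lra. }
  apply Cnorm2_arbitrarily_small. intros eps He.
  destruct (nrm2_tail_small x Hx eps He) as [I0 HI0]. set (I := Nat.max I0 (S j)).
  set (t := vtrunc I x). set (w := vsub x t).
  assert (Hw : l2 w) by (apply l2_vsub, l2_trunc; auto).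
  destruct (synth_finite_nrm2 t I (vtrunc_ge I x)) as [Hst _].
  assert (Ex : forall k, synth x k = vadd (synth t) (synth w) k).
  { intro k. rewrite (synth_ext x (vadd (vscale C1 t) w)), synth_linear.
    - unfold vadd, vscale, C1, Cmul, Cadd; Cring.
    - intro i. unfold w, t, vsub, vadd, vscale, Cadd, Cmul, Copp, C1; Cring. }
  assert (Et : ip (synth t) (F j) = x j).
  { rewrite (ip_ext_l _ _ _ (synth_finite t I (vtrunc_ge I x))), (ip_comb_orthonormal I) by (auto; lia).
    replace (Nat.ltb j I) with true by (symmetry; apply Nat.ltb_lt; lia). apply vtrunc_lt. lia. }
  rewrite (ip_ext_l _ _ _ Ex), ip_add_l, Et by auto using l2_synth, l2_F.
  replace (Cadd (Cadd (x j) (ip (synth w) (F j))) (Copp (x j))) with (ip (synth w) (F j))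
    by (unfold Cadd, Copp; Cring).
  pose proof (bessel (S j) (S j) F (synth w) (HON (S j)) (le_n _) (l2_synth w Hw)). simpl in H.
  pose proof (rsum_nonneg j (fun i => Cnorm2 (ip (synth w) (F i))) (fun i _ => Cnorm2_ge_0 _)).
  pose proof (nrm2_synth_le w Hw). specialize (HI0 I ltac:(lia)). fold t w in HI0. lra.
Qed.

Lemma synth_analysis y : l2 y -> forall k, synth (analysis y) k = y k.
Proof.
  intros. rewrite <- (ip_eb_r y k), (ip_ext_r _ _ _ (Hexp k)), ip_comb_r by auto using l2_F.
  unfold synth, analysis. apply csum_ext. intros.
  rewrite ip_eb_l. unfold Cconj, Cmul; Cring.
Qed.

Lemma synth_op_l2 x : l2 x -> synth_op x = synth x.
Proof. intros. unfold synth_op. destruct (excluded_middle_informative (l2 x)); tauto. Qed.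

Lemma synth_op_unitary : is_unitary synth_op analysis.
Proof.
  split; [|split; [|split; [|split]]].
  - split.
    + intros. rewrite !synth_op_l2 by auto using l2_vadd, l2_vscale. apply synth_linear.
    + exists 1. intros x r Hx. rewrite synth_op_l2, Rmult_1_l by (eapply l2_of_vnorm_le; eauto).
      apply synth_vnorm_le; auto.
  - split.
    + intros. unfold analysis. rewrite ip_add_l, ip_scale_l by auto using l2_F, l2_vscale. auto.
    + exists 1. intros x r Hx. rewrite Rmult_1_l. apply analysis_vnorm_le; auto.
  - intros. rewrite synth_op_l2 by auto. apply analysis_synth; auto.
  - intros. rewrite synth_op_l2 by (apply l2_analysis; auto). apply synth_analysis; auto.
  - intros x r. unfold synth_op. destruct (excluded_middle_informative (l2 x)); [split|tauto].
    + apply synth_vnorm_le.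
    + intro H. apply analysis_vnorm_le in H. replace x with (analysis (synth x)); auto.
      apply functional_extensionality. intro j. apply analysis_synth; auto.
Qed.

Lemma synth_op_eb j : synth_op (eb j) = F j.
Proof.
  apply functional_extensionality. intro k. rewrite synth_op_l2 by apply l2_eb.
  rewrite (synth_finite _ (S j)) by (intros; apply eb_other; lia).
  unfold comb. rewrite (csum_single _ _ j) by (try lia; intros; rewrite eb_other by auto; unfold Cmul, C0; Cring).
  rewrite eb_same. unfold Cmul, C1; Cring.
Qed.

End Synthesis.

(** * Unitaries with finitely supported columns *)

Lemma l2_op_apply T x : is_op T -> l2 x -> l2 (T x).
Proof. intros [_ [c Hc]] [r Hr]. exists (c * r). apply Hc; auto. Qed.

Lemma Mshift_eb k : Mshift (eb k) = eb (S k).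
Proof. apply functional_extensionality. intro m. destruct m; reflexivity. Qed.

(* Stage [j] lists [stage_len D j = 2 (D+1)^j] vectors: stage [0] is [x0, e_0], and stage
   [j+1] is stage [j] followed by the blocks [T_a (stage j)], [a < D]. *)
Fixpoint stage_len (D j : nat) : nat := match j with O => 2%nat | S j => (stage_len D j * S D)%nat end.

Fixpoint stage (T : nat -> op) (D : nat) (x0 : vec) (j s : nat) : vec :=
  match j with
  | O => if Nat.eqb s 0 then x0 else eb 0
  | S j' => if Nat.ltb s (stage_len D j') then stage T D x0 j' s
           else T ((s - stage_len D j') / stage_len D j')%nat
                  (stage T D x0 j' ((s - stage_len D j') mod stage_len D j'))
  end.

Definition word_seq (T : nat -> op) (D : nat) (x0 : vec) (s : nat) : vec := stage T D x0 s s.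

Lemma stage_len_ge_2 D j : (2 <= stage_len D j)%nat.
Proof. induction j; simpl; nia. Qed.

Lemma stage_len_mono D j k : (j <= k)%nat -> (stage_len D j <= stage_len D k)%nat.
Proof. intros. induction H. lia. simpl. nia. Qed.

Lemma stage_len_gt D j : (1 <= D)%nat -> (j < stage_len D j)%nat.
Proof. induction j; simpl; intros. lia. specialize (IHj H). nia. Qed.

Lemma stage_stable T D x0 j k s : (s < stage_len D j)%nat -> (j <= k)%nat ->
  stage T D x0 k s = stage T D x0 j s.
Proof.
  intros. induction H0. auto. simpl. pose proof (stage_len_mono D j m H0).
  replace (Nat.ltb s (stage_len D m)) with true by (symmetry; apply Nat.ltb_lt; lia). auto.
Qed.

Lemma word_seq_stage T D x0 j s : (1 <= D)%nat -> (s < stage_len D j)%nat ->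
  word_seq T D x0 s = stage T D x0 j s.
Proof.
  intros. unfold word_seq. destruct (Nat.le_ge_cases j s).
  - apply stage_stable; auto.
  - symmetry. apply stage_stable; auto. pose proof (stage_len_gt D s H). lia.
Qed.

Lemma stage_closed T D x0 j s a : (a < D)%nat -> (s < stage_len D j)%nat ->
  (stage_len D j + a * stage_len D j + s < stage_len D (S j))%nat /\
  T a (stage T D x0 j s) = stage T D x0 (S j) (stage_len D j + a * stage_len D j + s).
Proof.
  intros. split. simpl. nia.
  pose proof (stage_len_ge_2 D j). set (L := stage_len D j) in *. simpl. fold L.
  replace (Nat.ltb (L + a * L + s) L) with false by (symmetry; apply Nat.ltb_ge; lia).
  replace (L + a * L + s - L)%nat with (a * L + s)%nat by lia.
  rewrite Nat.div_add_l, Nat.div_small, Nat.add_0_r by lia.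
  rewrite Nat.Div0.add_mod, Nat.Div0.mod_mul, Nat.add_0_l, Nat.Div0.mod_mod, Nat.mod_small by lia.
  auto.
Qed.

Lemma l2_stage T D x0 : (forall a, (a < D)%nat -> is_op (T a)) -> l2 x0 ->
  forall j s, (s < stage_len D j)%nat -> l2 (stage T D x0 j s).
Proof.
  intros HT Hx0. induction j; simpl; intros.
  - destruct (Nat.eqb s 0); auto using l2_eb.
  - destruct (Nat.ltb s (stage_len D j)) eqn:E. apply IHj. apply Nat.ltb_lt; auto.
    apply Nat.ltb_ge in E. pose proof (stage_len_ge_2 D j).
    apply l2_op_apply. apply HT, Nat.Div0.div_lt_upper_bound. nia.
    apply IHj, Nat.mod_upper_bound. lia.
Qed.

Lemma eb_in_stage T D x0 m : (m < D)%nat -> T m = Mshift ->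
  forall k, exists s, (s < stage_len D k)%nat /\ stage T D x0 k s = eb k.
Proof.
  intros Hm HM. induction k.
  - exists 1%nat. split; [pose proof (stage_len_ge_2 D 0); lia | reflexivity].
  - destruct IHk as [s [Hs Hg]]. destruct (stage_closed T D x0 k s m Hm Hs) as [Hlt Heq].
    eexists. split; [exact Hlt|]. rewrite <- Heq, Hg, HM. apply Mshift_eb.
Qed.

Section WordBasis.
Variable T : nat -> op.
Variables D m : nat.
Variable x0 : vec.
Hypothesis HT : forall a, (a < D)%nat -> is_op (T a).
Hypothesis Hm : (m < D)%nat.
Hypothesis HM : T m = Mshift.
Hypothesis Hx0 : l2 x0.

Let g := word_seq T D x0.
Let tau := stage_len D.

Lemma l2_word_seq s : l2 (g s).
Proof. apply l2_stage; auto. apply stage_len_gt. lia. Qed.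

Lemma eb_in_word_seq k : exists s, (s < tau k)%nat /\ forall i, g s i = eb k i.
Proof.
  destruct (eb_in_stage T D x0 m Hm HM k) as [s [Hs Hse]]. exists s. split; auto.
  intro i. unfold g. rewrite (word_seq_stage T D x0 k s), Hse; auto. lia.
Qed.

Let F := onb g tau.

Lemma op_onb_in_span a j : (a < D)%nat -> span (tau (S j)) g (T a (F j)).
Proof.
  intros Ha.
  destruct (gram_schmidt_invariant g l2_word_seq (tau j)) as [_ [_ [_ Hspan]]].
  destruct (Hspan j (gs_rank_tau g l2_word_seq tau (stage_len_mono D) eb_in_word_seq j)) as [b Hb].
  apply (span_ext _ _ (comb (tau j) b (fun s => T a (g s)))).
  { intro k. rewrite <- op_comb by auto using l2_word_seq. f_equal. symmetry.
    apply functional_extensionality; exact Hb. }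
  apply span_comb. intros s Hs.
  destruct (stage_closed T D x0 j s a Ha Hs) as [Hlt Heq].
  apply (span_ext _ _ (g (tau j + a * tau j + s)%nat)).
  - intro k. unfold g. rewrite (word_seq_stage T D x0 j s), Heq, (word_seq_stage T D x0 (S j)); auto; lia.
  - apply span_gen. auto.
Qed.

(* [u] is synthesis along the Gram-Schmidt basis [F] of [word_seq]; [T_a u e_j = T_a F_j] lies in
   the span of stage [j + 1], which is orthogonal to all later basis vectors. *)
Theorem exists_unitary_finite_columns : nrm2 x0 = 1 ->
  exists u v, is_unitary u v /\ u (eb 0) = x0 /\
    forall a j, (a < D)%nat -> in_span_first (stage_len D (S j)) (v (T a (u (eb j)))).
Proof.
  intros Hn.
  pose proof (onb_support_tau g l2_word_seq tau (stage_len_mono D) eb_in_word_seq) as Hsupp.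
  exists (synth_op F tau), (analysis F). split; [|split].
  - apply synth_op_unitary; [exact (stage_len_mono D) | | exact Hsupp | ];
      [apply orthonormal_onb | apply eb_expansion];
      first [apply l2_word_seq | exact (stage_len_mono D) | apply eb_in_word_seq].
  - rewrite synth_op_eb by auto. apply onb_0;
      first [apply l2_word_seq | exact (stage_len_mono D) | apply eb_in_word_seq | auto].
  - intros a j Ha i Hi. rewrite synth_op_eb by auto.
    apply (span_orth_onb g l2_word_seq tau (stage_len_mono D) eb_in_word_seq (tau (S j))).
    + apply op_onb_in_span; auto.
    + pose proof (gs_rank_le g l2_word_seq (tau (S j))). unfold tau in *. lia.
Qed.

End WordBasis.

(** * Diagonal subsequences *)

Lemma strictly_incr_ge s : strictly_incr s -> forall n, (n <= s n)%nat.
Proof. intros H n. induction n. lia. specialize (H n). lia. Qed.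

Lemma strictly_incr_lt s : strictly_incr s -> forall n m, (n < m)%nat -> (s n < s m)%nat.
Proof. intros H n m Hnm. induction Hnm. apply H. specialize (H m). lia. Qed.

Lemma bounded_cv_subseq (u : nat -> R) B : (forall n, Rabs (u n) <= B) ->
  exists s, strictly_incr s /\ exists l, Un_cv (fun n => u (s n)) l.
Proof.
  intros Hb.
  destruct (Bolzano_Weierstrass u (fun c => -B <= c <= B) (compact_P3 (-B) B)) as [l Hl].
  { intro n. apply Rabs_le_between, Hb. }
  assert (Hpick : forall N (k : nat), exists p, (N <= p)%nat /\ Rabs (u p - l) < / INR (S k)).
  { intros N k. assert (Hd : 0 < / INR (S k)) by (apply Rinv_0_lt_compat, lt_0_INR; lia).
    assert (Hn : neighbourhood (disc l (mkposreal _ Hd)) l) by (exists (mkposreal _ Hd); intros y Hy; auto).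
    destruct (Hl _ N Hn) as [p [Hp Hv]]. exists p. auto. }
  set (pick N k := proj1_sig (constructive_indefinite_description _ (Hpick N k))).
  assert (Hpk : forall N k, (N <= pick N k)%nat /\ Rabs (u (pick N k) - l) < / INR (S k))
    by (intros; apply (proj2_sig (constructive_indefinite_description _ (Hpick N k)))).
  set (s := fix s n := match n with O => pick O O | S n => pick (S (s n)) (S n) end).
  exists s. split.
  - intro n. simpl. destruct (Hpk (S (s n)) (S n)). lia.
  - exists l. intros e He. destruct (archimed_cor1 e He) as [N [HN HN0]].
    exists N. intros n Hn. unfold R_dist.
    assert (Rabs (u (s n) - l) < / INR (S n)) by (destruct n; simpl; apply Hpk).
    eapply Rlt_trans. apply H. eapply Rle_lt_trans. 2: apply HN.
    apply Rinv_le_contravar. apply lt_0_INR; lia. apply le_INR; lia.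
Qed.

(* A canonical choice of subsequence, usable inside a recursive definition; it is the
   identity when [u] has no convergent subsequence. *)
Definition cv_subseq (u : nat -> R) : nat -> nat :=
  match excluded_middle_informative (exists s, strictly_incr s /\ exists l, Un_cv (fun n => u (s n)) l) with
  | left H => proj1_sig (constructive_indefinite_description _ H)
  | right _ => fun n => n
  end.

Lemma cv_subseq_spec u B : (forall n, Rabs (u n) <= B) ->
  strictly_incr (cv_subseq u) /\ exists l, Un_cv (fun n => u (cv_subseq u n)) l.
Proof.
  intros. unfold cv_subseq. destruct (excluded_middle_informative _) as [H'|H'].
  - apply (proj2_sig (constructive_indefinite_description _ H')).
  - exfalso. apply H'. eapply bounded_cv_subseq; eauto.
Qed.

Section Diagonal.
Variable a : nat -> nat -> R.
Variable B : nat -> R.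
Hypothesis Hb : forall k n, Rabs (a k n) <= B k.

Fixpoint nested (k : nat) : nat -> nat :=
  match k with
  | O => cv_subseq (a O)
  | S k => fun n => nested k (cv_subseq (fun m => a (S k) (nested k m)) n)
  end.

Lemma nested_spec k : strictly_incr (nested k) /\ exists l, Un_cv (fun n => a k (nested k n)) l.
Proof.
  induction k.
  - apply (cv_subseq_spec _ (B O)). auto.
  - destruct IHk as [Hs _].
    destruct (cv_subseq_spec (fun m => a (S k) (nested k m)) (B (S k))) as [Hs' Hl]; auto.
    split; [intro n; apply (strictly_incr_lt _ Hs), Hs' | exact Hl].
Qed.

Lemma nested_sub k e n : exists m, (n <= m)%nat /\ nested (k + e) n = nested k m.
Proof.
  revert n. induction e; intros.
  - exists n. rewrite Nat.add_0_r. auto.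
  - rewrite Nat.add_succ_r. simpl.
    destruct (cv_subseq_spec (fun m => a (S (k + e)) (nested (k + e) m)) (B (S (k + e)))) as [Hs _]; auto.
    destruct (IHe (cv_subseq (fun m => a (S (k + e)) (nested (k + e) m)) n)) as [m [Hm E]].
    exists m. split; auto. pose proof (strictly_incr_ge _ Hs n). lia.
Qed.

Lemma diagonal_subsequence : exists phi, strictly_incr phi /\ forall k, exists l, Un_cv (fun n => a k (phi n)) l.
Proof.
  exists (fun n => nested n n). split.
  - intro n. simpl.
    destruct (cv_subseq_spec (fun m => a (S n) (nested n m)) (B (S n))) as [Hs _]; auto.
    apply (strictly_incr_lt _ (proj1 (nested_spec n))). pose proof (strictly_incr_ge _ Hs (S n)). lia.
  - intros k. destruct (nested_spec k) as [_ [l Hl]]. exists l. intros e He.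
    destruct (Hl e He) as [N HN]. exists (Nat.max N k). intros n Hn.
    destruct (nested_sub k (n - k) n) as [m [Hm E]].
    replace (k + (n - k))%nat with n in E by lia. rewrite E. apply HN. lia.
Qed.

End Diagonal.

(** * Compactness of tuples with uniformly finitely supported columns *)

Definition Ccv (s : nat -> C) : Prop :=
  exists l1 l2, Un_cv (fun n => fst (s n)) l1 /\ Un_cv (fun n => snd (s n)) l2.

Lemma Ccv_ext s s' : (forall n, s n = s' n) -> Ccv s -> Ccv s'.
Proof.
  intros H [l1 [l2 [H1 H2]]]. exists l1, l2.
  split; [apply (Un_cv_ext (fun n => fst (s n))) | apply (Un_cv_ext (fun n => snd (s n)))]; auto;
    intro; rewrite H; auto.
Qed.

Lemma Ccv_csum I (x : nat -> C) (s : nat -> nat -> C) : (forall j, (j < I)%nat -> Ccv (fun n => s n j)) ->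
  Ccv (fun n => csum I (fun j => Cmul (x j) (s n j))).
Proof.
  induction I; intros.
  - exists 0, 0. simpl. unfold C0; simpl. split; apply Un_cv_const.
  - destruct IHI as [l1 [l2 [H1 H2]]]; [intros; apply H; lia|].
    destruct (H I ltac:(lia)) as [m1 [m2 [H3 H4]]].
    exists (l1 + (fst (x I) * m1 - snd (x I) * m2)), (l2 + (fst (x I) * m2 + snd (x I) * m1)). simpl. split.
    + apply CV_plus; auto. apply CV_minus; apply CV_mult; auto; apply Un_cv_const.
    + apply CV_plus; auto. apply CV_plus; apply CV_mult; auto; apply Un_cv_const.
Qed.

Lemma Ccv_cauchy s : Ccv s -> forall e, 0 < e -> exists N, forall n m, (N <= n)%nat -> (N <= m)%nat ->
  Cnorm2 (Cadd (s n) (Copp (s m))) <= e.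
Proof.
  intros [l1 [l2 [H1 H2]]] e He.
  set (dl := Rmin 1 (e / 8)).
  assert (Hd : 0 < dl) by (unfold dl; apply Rmin_glb_lt; lra).
  assert (Hd1 : dl <= 1) by apply Rmin_l. assert (Hd2 : dl <= e / 8) by apply Rmin_r.
  destruct (H1 dl Hd) as [N1 HN1]. destruct (H2 dl Hd) as [N2 HN2].
  exists (Nat.max N1 N2). intros. unfold R_dist in *.
  pose proof (HN1 n ltac:(lia)). pose proof (HN1 m ltac:(lia)).
  pose proof (HN2 n ltac:(lia)). pose proof (HN2 m ltac:(lia)).
  unfold Cnorm2, Cadd, Copp; simpl.
  apply Rabs_def2 in H3; apply Rabs_def2 in H4; apply Rabs_def2 in H5; apply Rabs_def2 in H6.
  set (x1 := fst (s n) + - fst (s m)). set (x2 := snd (s n) + - snd (s m)).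
  assert (-2*dl <= x1 <= 2*dl) by (unfold x1; split; lra).
  assert (-2*dl <= x2 <= 2*dl) by (unfold x2; split; lra).
  nra.
Qed.

Lemma eventually_all_below K (P : nat -> nat -> Prop) : (forall k N N', (N <= N')%nat -> P k N -> P k N') ->
  (forall k, (k < K)%nat -> exists N, P k N) -> exists N, forall k, (k < K)%nat -> P k N.
Proof.
  intros Hmono. induction K; intros H. exists O. intros; lia.
  destruct IHK as [N1 HN1]; [intros; apply H; lia|]. destruct (H K ltac:(lia)) as [N2 HN2].
  exists (Nat.max N1 N2). intros. destruct (Nat.eq_dec k K).
  - subst. apply (Hmono K N2); auto; lia.
  - apply (Hmono k N1); [lia | apply HN1; lia].
Qed.

Lemma sum_f_R0_support_bound (b : nat -> R) K e n : 0 <= e -> (forall k, 0 <= b k) ->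
  (forall k, (k < K)%nat -> b k <= e) -> (forall k, (K <= k)%nat -> b k = 0) ->
  sum_f_R0 b n <= INR K * e.
Proof.
  intros. assert (Hmin : forall n, sum_f_R0 b n <= INR (Nat.min (S n) K) * e).
  { induction n0; cbn [sum_f_R0].
    - destruct K. rewrite H2 by lia. simpl. lra.
      replace (Nat.min 1 (S K)) with 1%nat by lia. simpl. rewrite Rmult_1_l. apply H1; lia.
    - destruct (Nat.le_gt_cases K (S n0)).
      + rewrite H2 by lia. replace (Nat.min (S (S n0)) K) with (Nat.min (S n0) K) by lia. lra.
      + replace (Nat.min (S (S n0)) K) with (S (Nat.min (S n0) K)) by lia. rewrite S_INR.
        pose proof (H1 (S n0) H3). lra. }
  eapply Rle_trans. apply Hmin. apply Rmult_le_compat_r; auto. apply le_INR; lia.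
Qed.

Lemma finitely_supported_cauchy (w : nat -> vec) K : (forall n k, (K <= k)%nat -> w n k = C0) ->
  (forall k, (k < K)%nat -> Ccv (fun n => w n k)) ->
  forall eps, 0 < eps -> exists N, forall n m, (N <= n)%nat -> (N <= m)%nat -> vnorm_le (vsub (w n) (w m)) eps.
Proof.
  intros Hz Hc eps He.
  set (e := eps * eps / (INR K + 1)).
  assert (HK : 0 < INR K + 1) by (pose proof (pos_INR K); lra).
  assert (Hee : 0 < e) by (unfold e; apply Rdiv_lt_0_compat; nra).
  destruct (eventually_all_below K (fun k N => forall n m, (N <= n)%nat -> (N <= m)%nat ->
      Cnorm2 (Cadd (w n k) (Copp (w m k))) <= e)) as [N HN].
  { intros. apply H0; lia. }
  { intros. apply Ccv_cauchy; auto. }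
  exists N. intros n m Hn Hm. split. lra. intro p.
  eapply Rle_trans. apply (sum_f_R0_support_bound _ K e).
  - lra.
  - intros; apply Cnorm2_ge_0.
  - intros. apply HN; auto.
  - intros. unfold vsub. rewrite !Hz by auto. unfold Cnorm2, Cadd, Copp, C0; simpl; ring.
  - unfold e. apply (Rmult_le_reg_r (INR K + 1)); auto. field_simplify; nra.
Qed.

Lemma Un_cv_sum_Cnorm2_sub (A : nat -> C) (Bm : nat -> nat -> C) (L : nat -> C) p :
  (forall k, Un_cv (fun m => fst (Bm m k)) (fst (L k)) /\ Un_cv (fun m => snd (Bm m k)) (snd (L k))) ->
  Un_cv (fun m => sum_f_R0 (fun k => Cnorm2 (Cadd (A k) (Copp (Bm m k)))) p)
        (sum_f_R0 (fun k => Cnorm2 (Cadd (A k) (Copp (L k)))) p).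
Proof.
  intros. assert (Ht : forall k, Un_cv (fun m => Cnorm2 (Cadd (A k) (Copp (Bm m k))))
                                      (Cnorm2 (Cadd (A k) (Copp (L k))))).
  { intro k. destruct (H k) as [H1 H2]. unfold Cnorm2, Cadd, Copp; simpl.
    assert (E1 := CV_minus _ _ _ _ (Un_cv_const (fst (A k))) H1).
    assert (E2 := CV_minus _ _ _ _ (Un_cv_const (snd (A k))) H2).
    eapply Un_cv_ext. 2: apply (CV_plus _ _ _ _ (CV_mult _ _ _ _ E1 E1) (CV_mult _ _ _ _ E2 E2)).
    intro; simpl; ring. }
  induction p; simpl. apply Ht. apply CV_plus; auto.
Qed.

Fixpoint max_upto (Nf : nat -> nat) (n : nat) : nat :=
  match n with O => O | S n' => Nat.max (max_upto Nf n') (Nf n') end.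

Lemma max_upto_ge Nf I j : (j < I)%nat -> (Nf j <= max_upto Nf I)%nat.
Proof.
  induction I; intros. lia. simpl. destruct (Nat.eq_dec j I).
  - subst. apply Nat.le_max_r.
  - apply Nat.le_trans with (max_upto Nf I). apply IHI. lia. apply Nat.le_max_l.
Qed.

Section Compactness.
Variable d : nat.
Variable Z : nat -> tuple.
Variable c : R.
Variable Nf : nat -> nat.
Hypothesis Htup : forall n, is_tuple d (Z n).
Hypothesis Hbd : forall n, tnorm_le d (Z n) c.
Hypothesis Hsupp : forall n i j, (i < d)%nat -> in_span_first (Nf j) (Z n i (eb j)).
Hypothesis Hd : (0 < d)%nat.

Lemma c_nonneg : 0 <= c.
Proof. destruct (Hbd 0%nat 0%nat Hd (eb 0) 1 (vnorm_le_eb 0)) as [H _]. lra. Qed.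

Lemma Z_linear n i a x y : (i < d)%nat -> l2 x -> l2 y ->
  Z n i (vadd (vscale a x) y) = vadd (vscale a (Z n i x)) (Z n i y).
Proof. intros. apply functional_extensionality. intro k. apply (proj1 (Htup n i H)); auto. Qed.

Lemma Z_entry_bound n i j m : (i < d)%nat ->
  Rabs (fst (Z n i (eb j) m)) <= c /\ Rabs (snd (Z n i (eb j) m)) <= c.
Proof.
  intros. destruct (Hbd n i H (eb j) 1 (vnorm_le_eb j)) as [_ Hs].
  pose proof (term_le_sum_f_R0 (fun k => Cnorm2 (Z n i (eb j) k)) m (fun k => Cnorm2_ge_0 _)).
  specialize (Hs m). rewrite Rmult_1_r in Hs. pose proof c_nonneg.
  destruct (Rle_lt_or_eq_dec 0 c H1).
  - apply Cnorm2_small; simpl in *; lra.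
  - subst c. assert (Cnorm2 (Z n i (eb j) m) = 0) by (pose proof (Cnorm2_ge_0 (Z n i (eb j) m)); simpl in *; lra).
    apply Cnorm2_eq_0 in H2. rewrite H2. simpl. rewrite Rabs_R0. lra.
Qed.

(* All real and imaginary parts of all matrix entries [<Z_n^i e_j, e_m>], enumerated
   through Cantor's pairing so that one diagonal argument handles them all. *)
Definition entry_code (n k : nat) : R :=
  let (p, q) := of_nat k in let (i, j) := of_nat p in let (m, b) := of_nat q in
  if Nat.ltb i d then (if Nat.eqb b 0 then fst (Z n i (eb j) m) else snd (Z n i (eb j) m)) else 0.

Lemma entry_code_bound k n : Rabs (entry_code n k) <= c.
Proof.
  unfold entry_code. destruct (of_nat k) as [p q], (of_nat p) as [i j], (of_nat q) as [m b].
  destruct (Nat.ltb i d) eqn:E.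
  - apply Nat.ltb_lt in E. destruct (Nat.eqb b 0); apply Z_entry_bound; auto.
  - rewrite Rabs_R0. apply c_nonneg.
Qed.

Definition phi_entries : nat -> nat := proj1_sig (constructive_indefinite_description _
  (diagonal_subsequence (fun k n => entry_code n k) (fun _ => c) (fun k n => entry_code_bound k n))).

Lemma phi_entries_spec : strictly_incr phi_entries /\
  forall k, exists l, Un_cv (fun n => entry_code (phi_entries n) k) l.
Proof. unfold phi_entries. destruct (constructive_indefinite_description _ _). auto. Qed.

Lemma entries_cv i j m : (i < d)%nat -> Ccv (fun n => Z (phi_entries n) i (eb j) m).
Proof.
  intros. destruct (proj2 phi_entries_spec (to_nat (to_nat (i, j), to_nat (m, 0%nat)))) as [l1 H1].
  destruct (proj2 phi_entries_spec (to_nat (to_nat (i, j), to_nat (m, 1%nat)))) as [l2 H2].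
  exists l1, l2. unfold entry_code in H1, H2. rewrite !cancel_of_to in H1, H2.
  replace (Nat.ltb i d) with true in H1, H2 by (symmetry; apply Nat.ltb_lt; auto). auto.
Qed.

(* On [vtrunc I x] this is finite support plus entrywise convergence; the remainder
   [x - trunc I x] is small and [Z_n^i] is uniformly bounded. *)
Lemma sot_cauchy i x : (i < d)%nat -> l2 x -> forall eps, 0 < eps -> exists N, forall n m,
  (N <= n)%nat -> (N <= m)%nat -> vnorm_le (vsub (Z (phi_entries n) i x) (Z (phi_entries m) i x)) eps.
Proof.
  intros Hi Hx eps He. pose proof c_nonneg as Hc.
  set (dl := eps / (4 * (c + 1))).
  assert (Hdl : 0 < dl) by (unfold dl; apply Rdiv_lt_0_compat; lra).
  assert (Hcd : c * dl <= eps / 4)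
    by (unfold dl; apply (Rmult_le_reg_r (4 * (c+1))); [lra | field_simplify; nra]).
  destruct (nrm2_tail_small x Hx (dl * dl) ltac:(nra)) as [I HI].
  set (t := vtrunc I x). set (w := vsub x t).
  assert (Ht : l2 t) by (apply l2_trunc; auto).
  assert (Hw : vnorm_le w dl) by (apply vnorm_le_nrm2; [apply l2_vsub; auto | split; [lra | apply HI; lia]]).
  set (W := fun n => Z (phi_entries n) i t).
  assert (EW : forall n k, W n k = comb I x (fun j => Z (phi_entries n) i (eb j)) k).
  { intros. unfold W. replace t with (comb I x eb).
    - apply op_comb; auto using l2_eb. apply Htup; auto.
    - apply functional_extensionality; intro; rewrite comb_eb; reflexivity. }
  destruct (finitely_supported_cauchy W (max_upto Nf I)) with (eps := eps / 2) as [N HN].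
  { intros n k Hk. rewrite EW. apply csum_zero. intros j Hj.
    rewrite (Hsupp (phi_entries n) i j Hi k) by (pose proof (max_upto_ge Nf I j Hj); lia).
    unfold Cmul, C0; Cring. }
  { intros k Hk. apply (Ccv_ext (fun n => csum I (fun j => Cmul (x j) (Z (phi_entries n) i (eb j) k)))).
    - intro n. rewrite EW. reflexivity.
    - apply Ccv_csum. intros. apply entries_cv; auto. }
  { lra. }
  exists N. intros n m Hn Hm.
  assert (Ex : x = vadd (vscale C1 t) w)
    by (apply functional_extensionality; intro k; unfold w, t, vadd, vscale, vsub, Cadd, Cmul, Copp, C1; Cring).
  replace (vsub (Z (phi_entries n) i x) (Z (phi_entries m) i x))
    with (vadd (vsub (W n) (W m)) (vsub (Z (phi_entries n) i w) (Z (phi_entries m) i w))).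
  - apply vnorm_le_mono with (eps / 2 + (c * dl + c * dl)); [|lra].
    apply vnorm_le_add; [apply HN; auto | apply vnorm_le_sub; apply Hbd; auto].
  - rewrite Ex, !Z_linear by (auto; apply l2_of_vnorm_le with dl; auto).
    apply functional_extensionality; intro k. unfold W, vadd, vsub, vscale. fold t.
    unfold Cadd, Cmul, Copp, C1; Cring.
Qed.

Definition sot_limit (i : nat) (x : vec) (k : nat) : C :=
  (real (Lim_seq (fun n => fst (Z (phi_entries n) i x k))), real (Lim_seq (fun n => snd (Z (phi_entries n) i x k)))).

Lemma sot_limit_cv i x k : (i < d)%nat -> l2 x ->
  Un_cv (fun n => fst (Z (phi_entries n) i x k)) (fst (sot_limit i x k)) /\
  Un_cv (fun n => snd (Z (phi_entries n) i x k)) (snd (sot_limit i x k)).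
Proof.
  intros. unfold sot_limit; simpl.
  assert (Hc : forall e, 0 < e -> exists N, forall n m, (N <= n)%nat -> (N <= m)%nat ->
     Rabs (fst (Z (phi_entries n) i x k) - fst (Z (phi_entries m) i x k)) <= e /\
     Rabs (snd (Z (phi_entries n) i x k) - snd (Z (phi_entries m) i x k)) <= e).
  { intros e He. destruct (sot_cauchy i x H H0 e He) as [N HN]. exists N. intros n m Hn Hm.
    destruct (HN n m Hn Hm) as [_ Hs]. specialize (Hs k).
    pose proof (term_le_sum_f_R0 (fun j => Cnorm2 (vsub (Z (phi_entries n) i x) (Z (phi_entries m) i x) j)) k
      (fun j => Cnorm2_ge_0 _)).
    assert (Hb : Cnorm2 (vsub (Z (phi_entries n) i x) (Z (phi_entries m) i x) k) <= e * e) by (simpl in *; lra).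
    apply Cnorm2_small in Hb; auto. }
  split; apply Un_cv_Lim_seq; intros e He; destruct (Hc e He) as [N HN]; exists N; intros; apply HN; auto.
Qed.

Lemma sot_limit_sot : sot_conv_sub d Z phi_entries sot_limit.
Proof.
  intros i Hi x Hx eps He. destruct (sot_cauchy i x Hi Hx (eps / 2) ltac:(lra)) as [N HN].
  exists N. intros n Hn. split. lra. intro p.
  apply (Un_cv_le (fun m => sum_f_R0
    (fun k => Cnorm2 (Cadd (Z (phi_entries n) i x k) (Copp (Z (phi_entries m) i x k)))) p)).
  - apply (Un_cv_sum_Cnorm2_sub (fun k => Z (phi_entries n) i x k) (fun m k => Z (phi_entries m) i x k)
      (sot_limit i x)).
    intro; apply sot_limit_cv; auto.
  - exists N. intros m Hm. destruct (HN n m Hn Hm) as [_ Hs]. specialize (Hs p). unfold vsub in Hs. nra.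
Qed.

Lemma sot_limit_linear i a x y k : (i < d)%nat -> l2 x -> l2 y ->
  sot_limit i (vadd (vscale a x) y) k = vadd (vscale a (sot_limit i x)) (sot_limit i y) k.
Proof.
  intros Hi Hx Hy. assert (Hxy : l2 (vadd (vscale a x) y)) by auto using l2_vadd, l2_vscale.
  destruct (sot_limit_cv i _ k Hi Hxy) as [A1 A2].
  destruct (sot_limit_cv i x k Hi Hx) as [B1 B2]. destruct (sot_limit_cv i y k Hi Hy) as [C1' C2'].
  assert (E1 : forall n, fst (Z (phi_entries n) i (vadd (vscale a x) y) k) =
    fst a * fst (Z (phi_entries n) i x k) - snd a * snd (Z (phi_entries n) i x k) + fst (Z (phi_entries n) i y k))
    by (intro; rewrite Z_linear; auto; unfold vadd, vscale, Cadd, Cmul; simpl; ring).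
  assert (E2 : forall n, snd (Z (phi_entries n) i (vadd (vscale a x) y) k) =
    fst a * snd (Z (phi_entries n) i x k) + snd a * fst (Z (phi_entries n) i x k) + snd (Z (phi_entries n) i y k))
    by (intro; rewrite Z_linear; auto; unfold vadd, vscale, Cadd, Cmul; simpl; ring).
  apply (Un_cv_ext _ _ E1) in A1. apply (Un_cv_ext _ _ E2) in A2.
  unfold vadd, vscale, Cadd, Cmul; apply C_ext; simpl; eapply UL_sequence; eauto.
  - apply CV_plus; auto. apply CV_minus; apply CV_mult; auto; apply Un_cv_const.
  - apply CV_plus; auto. apply CV_plus; apply CV_mult; auto; apply Un_cv_const.
Qed.

Lemma sot_limit_bounded i : (i < d)%nat -> opnorm_le (sot_limit i) c.
Proof.
  intros Hi x r Hx. pose proof c_nonneg. split; [destruct Hx; nra|]. intro p.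
  assert (Hnorm : forall v : vec,
      sum_f_R0 (fun k => Cnorm2 (v k)) p = sum_f_R0 (fun k => Cnorm2 (Cadd C0 (Copp (v k)))) p)
    by (intros; apply sum_eq; intros; unfold Cnorm2, Cadd, Copp, C0; simpl; ring).
  rewrite Hnorm. apply (Un_cv_le (fun m => sum_f_R0 (fun k => Cnorm2 (Cadd C0 (Copp (Z (phi_entries m) i x k)))) p)).
  - apply (Un_cv_sum_Cnorm2_sub (fun _ => C0) (fun m k => Z (phi_entries m) i x k) (sot_limit i x)).
    intro; apply sot_limit_cv; auto. eapply l2_of_vnorm_le; eauto.
  - exists O. intros m _. rewrite <- Hnorm. apply (Hbd (phi_entries m) i Hi x r Hx).
Qed.

Lemma sot_limit_tuple : is_tuple d sot_limit.
Proof.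
  intros i Hi. split.
  - intros. apply sot_limit_linear; auto.
  - exists c. apply sot_limit_bounded; auto.
Qed.

End Compactness.

Theorem sot_compact_finite_columns d (Z : nat -> tuple) c (Nf : nat -> nat) :
  (forall n, is_tuple d (Z n)) -> (forall n, tnorm_le d (Z n) c) ->
  (forall n i j, (i < d)%nat -> in_span_first (Nf j) (Z n i (eb j))) ->
  exists phi Y, strictly_incr phi /\ is_tuple d Y /\ sot_conv_sub d Z phi Y.
Proof.
  intros Htup Hbd Hsupp. destruct d.
  - exists (fun n => n), (fun _ x => x). split; [intro; lia | split; intros i Hi; lia].
  - assert (Hd : (0 < S d)%nat) by lia.
    exists (phi_entries (S d) Z c Hbd Hd), (sot_limit (S d) Z c Hbd Hd).
    split; [apply phi_entries_spec | split].
    + apply (sot_limit_tuple _ _ _ Nf); auto.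
    + apply (sot_limit_sot _ _ _ Nf); auto.
Qed.

Lemma nat_choice {T : Type} (P : nat -> T -> Prop) : (forall n, exists a, P n a) -> exists f, forall n, P n (f n).
Proof.
  intros H. exists (fun n => proj1_sig (constructive_indefinite_description _ (H n))). intro n.
  apply (proj2_sig (constructive_indefinite_description _ (H n))).
Qed.

Lemma op_zero T : is_op T -> forall k, T vzero k = C0.
Proof.
  intros [Hl _] k. pose proof (Hl (Copp C1) vzero vzero l2_vzero l2_vzero k).
  replace (vadd (vscale (Copp C1) vzero) vzero) with vzero in H.
  - rewrite H. unfold vadd, vscale, Cadd, Cmul, Copp, C1; Cring.
  - apply functional_extensionality; intro; unfold vadd, vscale, vzero, Cadd, Cmul, Copp, C1, C0; Cring.
Qed.

Lemma op_scale T a y : is_op T -> l2 y -> T (vscale a y) = vscale a (T y).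
Proof.
  intros. apply functional_extensionality; intro k.
  pose proof (proj1 H a y vzero H0 l2_vzero k).
  replace (vadd (vscale a y) vzero) with (vscale a y) in H1
    by (apply functional_extensionality; intro; unfold vadd, vzero, C0, Cadd; Cring).
  rewrite H1. unfold vadd. rewrite op_zero; auto. unfold vscale, Cadd, C0; Cring.
Qed.

Lemma opnorm_le_mono T c c' : opnorm_le T c -> c <= c' -> opnorm_le T c'.
Proof.
  intros H Hc x r Hx. apply vnorm_le_mono with (c * r). apply H; auto.
  destruct Hx. apply Rmult_le_compat_r; auto.
Qed.

Lemma unitary_l2 u v x : is_unitary u v -> l2 x -> l2 (u x).
Proof. intros [Hu _] Hx. apply l2_op_apply; auto. Qed.

Lemma unitary_adjoint_vnorm_le u v y s : is_unitary u v -> l2 y -> (vnorm_le (v y) s <-> vnorm_le y s).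
Proof.
  intros [_ [_ [_ [Huv Hiso]]]] Hy.
  assert (u (v y) = y) by (apply functional_extensionality; apply Huv; auto).
  rewrite (Hiso (v y) s), H. tauto.
Qed.

Lemma conj_op u v T c : is_unitary u v -> is_op T -> opnorm_le T c ->
  is_op (fun x => v (T (u x))) /\ opnorm_le (fun x => v (T (u x))) c.
Proof.
  intros Hun HT Hc. pose proof Hun as [[Hul _] [[Hvl _] [_ [_ Hiso]]]].
  assert (Hc2 : opnorm_le (fun x => v (T (u x))) c).
  { intros x r Hx. assert (Hl : l2 (T (u x))) by
      (apply l2_op_apply; auto; apply (unitary_l2 u v); auto; apply (l2_of_vnorm_le x r); auto).
    apply (unitary_adjoint_vnorm_le u v _ _ Hun Hl). apply Hc. apply (proj1 (Hiso x r)). auto. }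
  split; auto. split; [|exists c; auto].
  intros a x y Hx Hy k.
  replace (u (vadd (vscale a x) y)) with (vadd (vscale a (u x)) (u y)) by
    (symmetry; apply functional_extensionality; apply Hul; auto).
  replace (T (vadd (vscale a (u x)) (u y))) with (vadd (vscale a (T (u x))) (T (u y))) by
    (symmetry; apply functional_extensionality; apply (proj1 HT); apply unitary_l2 with v; auto).
  apply Hvl; apply l2_op_apply; auto; apply unitary_l2 with v; auto.
Qed.

Lemma conj_tuple_bounded d u v X c : is_unitary u v -> is_tuple d X -> tnorm_le d X c ->
  is_tuple d (conj_tuple u v X) /\ tnorm_le d (conj_tuple u v X) c.
Proof. intros. split; intros i Hi; apply (conj_op u v (X i) c); auto. Qed.

Lemma tuple_bounded d X : is_tuple d X -> exists c, 0 <= c /\ tnorm_le d X c.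
Proof.
  intros H. enough (forall m, (m <= d)%nat -> exists c, 0 <= c /\ forall i, (i < m)%nat -> opnorm_le (X i) c)
    as Hm by (destruct (Hm d (le_n _)) as [c Hc]; exists c; auto).
  induction m; intros. exists 0. split. lra. intros; lia.
  destruct IHm as [c1 [Hc1 H1]]; [lia|]. destruct (proj2 (H m ltac:(lia))) as [c2 H2].
  exists (Rmax c1 (Rmax c2 0)). pose proof (Rmax_l c1 (Rmax c2 0)). pose proof (Rmax_r c1 (Rmax c2 0)).
  pose proof (Rmax_l c2 0). pose proof (Rmax_r c2 0). split. lra. intros.
  destruct (Nat.eq_dec i m).
  - subst. apply opnorm_le_mono with c2; auto. lra.
  - apply opnorm_le_mono with c1. apply H1; lia. lra.
Qed.

Lemma Mshift_opnorm : opnorm_le Mshift 1.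
Proof.
  intros x r [Hr H]. split. lra. intro n. rewrite Rmult_1_l. destruct n.
  - simpl. unfold Cnorm2, C0; simpl. nra.
  - replace (sum_f_R0 (fun k => Cnorm2 (Mshift x k)) (S n)) with (sum_f_R0 (fun k => Cnorm2 (x k)) n); auto.
    induction n. simpl. unfold Cnorm2, C0; simpl; ring.
    rewrite sum_N_predN by lia. simpl pred. rewrite IHn. reflexivity.
Qed.

Lemma Mshift_op : is_op Mshift.
Proof.
  split; [|exists 1; apply Mshift_opnorm].
  intros a x y Hx Hy k. destruct k; simpl; unfold vadd, vscale, Cadd, Cmul, C0; [Cring | reflexivity].
Qed.

Lemma letter_op_op d X a : is_tuple d X -> (a <= d)%nat -> is_op (letter_op d X a).
Proof.
  intros. unfold letter_op. destruct (Nat.eqb a d) eqn:E. apply Mshift_op.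
  apply Nat.eqb_neq in E. apply H. lia.
Qed.

Lemma l2_word_eval d X w x : is_tuple d X -> (forall a, In a w -> (a <= d)%nat) -> l2 x -> l2 (word_eval d X w x).
Proof. induction w; simpl; intros; auto. apply l2_op_apply; auto. apply letter_op_op; auto. Qed.

Lemma l2_poly_eval d X k p x : is_tuple d X -> poly_in_P k d p -> l2 x -> l2 (poly_eval d X p x).
Proof.
  induction p as [|[c w] p IH]; simpl; intros. apply l2_vzero.
  apply l2_vadd; [apply l2_vscale, l2_word_eval | apply IH]; auto.
  - intros. apply (proj2 (H0 (c, w) (or_introl eq_refl))). auto.
  - intros cw Hcw. apply H0; right; auto.
Qed.

Definition prepend (i : nat) (cw : C * list nat) : C * list nat := (fst cw, i :: snd cw).

Lemma op_poly_eval d X i k p x : is_tuple d X -> (i < d)%nat -> poly_in_P k d p -> l2 x ->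
  forall m, X i (poly_eval d X p x) m = poly_eval d X (map (prepend i) p) x m.
Proof.
  intros HX Hi. induction p as [|[c w] p IH]; simpl; intros Hp Hx m.
  - apply op_zero, HX; auto.
  - assert (Hw : l2 (word_eval d X w x))
      by (apply l2_word_eval; auto; intros; apply (proj2 (Hp (c, w) (or_introl eq_refl))); auto).
    assert (Hpp : poly_in_P k d p) by (intros cw Hcw; apply Hp; right; auto).
    rewrite (proj1 (HX i Hi)) by (auto; apply (l2_poly_eval d X k); auto).
    unfold vadd, vscale. rewrite IH by auto. unfold letter_op.
    replace (Nat.eqb i d) with false by (symmetry; apply Nat.eqb_neq; lia). auto.
Qed.

Lemma shift_form_columns d X u v : is_tuple d X -> shift_form_unitary d X u v ->
  forall i j, (i < d)%nat -> in_span_first (alpha (S j) d) (v (X i (u (eb j)))).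
Proof.
  intros HX [Hun Hk] i j Hi.
  destruct (proj1 (Hk j) (eb j)) as [p [Hp Hpe]]; [intros m Hm; apply eb_other; lia|].
  replace (u (eb j)) with (poly_eval d X p (eb 0)) by (symmetry; apply functional_extensionality; auto).
  apply (proj2 (Hk (S j))). exists (map (prepend i) p). split.
  - intros cw Hcw. apply in_map_iff in Hcw. destruct Hcw as [[c w] [E Hin]]. subst cw. unfold prepend; simpl.
    destruct (Hp (c, w) Hin) as [H1 H2]. simpl in H1, H2. split. lia. intros a [Ha|Ha]; [lia | auto].
  - intro m. apply (op_poly_eval d X i j); auto using l2_eb.
Qed.

Lemma shift_forms_sot_cv d (X : nat -> tuple) :
  (forall n, is_tuple d (X n)) -> (exists c, forall n, tnorm_le d (X n) c) ->
  forall u v : nat -> op, (forall n, shift_form_unitary d (X n) (u n) (v n)) ->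
  exists phi Y, strictly_incr phi /\ is_tuple d Y /\ sot_conv_sub d (fun n => conj_tuple (u n) (v n) (X n)) phi Y.
Proof.
  intros HX [c Hc] u v Hs.
  apply (sot_compact_finite_columns d _ c (fun j => alpha (S j) d)).
  - intro n. apply (conj_tuple_bounded d (u n) (v n) (X n) c); auto. apply (Hs n).
  - intro n. apply (conj_tuple_bounded d (u n) (v n) (X n) c); auto. apply (Hs n).
  - intros n i j Hi. apply (shift_form_columns d (X n)); auto.
Qed.

Lemma exists_unitaries_sot_cv d (X : nat -> tuple) :
  (forall n, is_tuple d (X n)) -> (exists c, forall n, tnorm_le d (X n) c) ->
  exists (U V : nat -> op) (phi : nat -> nat) (Y : tuple),
    (forall n, is_unitary (U n) (V n)) /\ strictly_incr phi /\ is_tuple d Y /\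
    sot_conv_sub d (fun n => conj_tuple (U n) (V n) (X n)) phi Y.
Proof.
  intros HX [c Hc].
  assert (Hframe : forall n, exists uv : op * op, is_unitary (fst uv) (snd uv) /\
     forall i j, (i < d)%nat -> in_span_first (stage_len (S d) (S j)) (snd uv (X n i (fst uv (eb j))))).
  { intro n. destruct (exists_unitary_finite_columns (letter_op d (X n)) (S d) d (eb 0)) as [u [v [Hu [_ Hcol]]]].
    - intros. apply letter_op_op; auto. lia.
    - lia.
    - unfold letter_op. rewrite Nat.eqb_refl. auto.
    - apply l2_eb.
    - apply nrm2_eb.
    - exists (u, v). split; auto. intros i j Hi. specialize (Hcol i j ltac:(lia)).
      unfold letter_op in Hcol. replace (Nat.eqb i d) with false in Hcol by (symmetry; apply Nat.eqb_neq; lia).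
      auto. }
  destruct (nat_choice _ Hframe) as [f Hf].
  destruct (sot_compact_finite_columns d (fun n => conj_tuple (fst (f n)) (snd (f n)) (X n)) c
              (fun j => stage_len (S d) (S j))) as [phi [Y [H1 [H2 H3]]]].
  - intro n. apply (conj_tuple_bounded d _ _ (X n) c); auto. apply Hf.
  - intro n. apply (conj_tuple_bounded d _ _ (X n) c); auto. apply Hf.
  - intros n i j Hi. apply Hf; auto.
  - exists (fun n => fst (f n)), (fun n => snd (f n)), phi, Y. split; [intro; apply Hf | auto].
Qed.

Lemma exists_unit_vector_large_image d H : is_tuple d H -> tnorm_eq d H 1 ->
  exists i x, (i < d)%nat /\ l2 x /\ nrm2 x = 1 /\ ~ vnorm_le (H i x) (1/2).
Proof.
  intros HH [_ Hmin]. apply NNPP. intro Hn.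
  enough (tnorm_le d H (1/2)) by (specialize (Hmin _ H0); lra).
  intros i Hi x r Hx. assert (Hl : l2 x) by (eapply l2_of_vnorm_le; eauto).
  destruct (proj1 (vnorm_le_nrm2 x r Hl) Hx) as [Hr Hnr].
  destruct (Req_EM_T (nrm2 x) 0) as [E|E].
  - replace x with vzero by (apply functional_extensionality; intro k; symmetry; apply nrm2_eq_0; auto).
    replace (H i vzero) with vzero by (apply functional_extensionality; intro; symmetry; apply op_zero; auto).
    apply vnorm_le_zero. lra.
  - assert (Hpos : 0 < nrm2 x) by (pose proof (nrm2_ge_0 x Hl); lra).
    destruct (normz_spec x Hl Hpos) as [Hlz [Hzz Hxz]].
    assert (Hv : vnorm_le (H i (normz x)) (1/2)).
    { apply NNPP. intro. apply Hn. exists i, (normz x). repeat split; auto.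
      rewrite ip_self in Hzz. unfold C1 in Hzz. inversion Hzz. auto. }
    rewrite Hxz, op_scale by auto.
    apply vnorm_le_mono with (sqrt (nrm2 x) * (1/2)).
    + apply vnorm_le_scale; auto. apply sqrt_pos. unfold Cnorm2; simpl. rewrite sqrt_sqrt; lra.
    + assert (sqrt (nrm2 x) <= r) by (rewrite <- (sqrt_Rsqr r) by auto; apply sqrt_le_1_alt; unfold Rsqr; auto).
      lra.
Qed.

Definition joint_tuple (d : nat) (X Hn : tuple) : tuple :=
  fun a => if Nat.ltb a d then X a else if Nat.ltb a (2 * d) then Hn (a - d)%nat else Mshift.

Lemma joint_tuple_X d X Hn i : (i < d)%nat -> joint_tuple d X Hn i = X i.
Proof. intros. unfold joint_tuple. replace (Nat.ltb i d) with true by (symmetry; apply Nat.ltb_lt; auto). auto. Qed.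

Lemma joint_tuple_H d X Hn i : (i < d)%nat -> joint_tuple d X Hn (i + d)%nat = Hn i.
Proof.
  intros. unfold joint_tuple.
  replace (Nat.ltb (i + d) d) with false by (symmetry; apply Nat.ltb_ge; lia).
  replace (Nat.ltb (i + d) (2 * d)) with true by (symmetry; apply Nat.ltb_lt; lia).
  f_equal. lia.
Qed.

Lemma joint_tuple_M d X Hn : joint_tuple d X Hn (2 * d)%nat = Mshift.
Proof.
  unfold joint_tuple. replace (Nat.ltb (2 * d) d) with false by (symmetry; apply Nat.ltb_ge; lia).
  rewrite Nat.ltb_irrefl. auto.
Qed.

Lemma joint_tuple_bounded d X Hn c : is_tuple d X -> tnorm_le d X c -> is_tuple d Hn -> tnorm_le d Hn 1 ->
  1 <= c -> forall a, (a < S (2 * d))%nat -> is_op (joint_tuple d X Hn a) /\ opnorm_le (joint_tuple d X Hn a) c.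
Proof.
  intros HX HcX HH HcH Hc a Ha.
  destruct (Nat.lt_ge_cases a d); [|destruct (Nat.lt_ge_cases a (2 * d))].
  - rewrite joint_tuple_X by auto. split; auto.
  - replace a with (a - d + d)%nat by lia. rewrite joint_tuple_H by lia.
    split; [apply HH; lia | apply opnorm_le_mono with 1; auto; apply HcH; lia].
  - replace a with (2 * d)%nat by lia. rewrite joint_tuple_M.
    split; [apply Mshift_op | apply opnorm_le_mono with 1; auto; apply Mshift_opnorm].
Qed.

(* [ix = (i, x)] with [||H^i x|| > 1/2], and [uv = (u, u^* )] with [u e_0 = x] conjugating
   [(X, H, M)] to a tuple with finitely supported columns. *)
Definition good_frame (d : nat) (X Hn : tuple) (ix : nat * vec) (uv : op * op) : Prop :=
  (fst ix < d)%nat /\ ~ vnorm_le (Hn (fst ix) (snd ix)) (1/2) /\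
  is_unitary (fst uv) (snd uv) /\ fst uv (eb 0) = snd ix /\
  forall a j, (a < S (2 * d))%nat ->
    in_span_first (stage_len (S (2 * d)) (S j)) (snd uv (joint_tuple d X Hn a (fst uv (eb j)))).

Lemma exists_good_frame d X Hn c : is_tuple d X -> tnorm_le d X c -> 1 <= c ->
  is_tuple d Hn -> tnorm_eq d Hn 1 -> exists ix uv, good_frame d X Hn ix uv.
Proof.
  intros HX HcX Hc HH Heq.
  destruct (exists_unit_vector_large_image d Hn HH Heq) as [i [x [Hi [Hx [Hn1 Hbig]]]]].
  destruct (exists_unitary_finite_columns (joint_tuple d X Hn) (S (2 * d)) (2 * d) x) as [u [v [Hu [Hu0 Hcol]]]];
    auto using joint_tuple_M.
  - intros. apply (joint_tuple_bounded d X Hn c); auto. apply Heq.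
  - exists (i, x), (u, v). unfold good_frame; simpl. auto.
Qed.

Lemma sot_limit_nonzero d (W Wa : nat -> op) (Hs : nat -> tuple) (ix : nat -> nat * vec) phi H' :
  (forall n, is_tuple d (Hs n)) ->
  (forall n, (fst (ix n) < d)%nat /\ ~ vnorm_le (Hs n (fst (ix n)) (snd (ix n))) (1/2) /\
             is_unitary (W n) (Wa n) /\ W n (eb 0) = snd (ix n)) ->
  sot_conv_sub d (fun n => conj_tuple (W n) (Wa n) (Hs n)) phi H' ->
  exists i x k, (i < d)%nat /\ l2 x /\ H' i x k <> C0.
Proof.
  intros HH Hix Hsot. apply NNPP. intro Hcon.
  assert (Hz : forall i k, (i < d)%nat -> H' i (eb 0) k = C0)
    by (intros; apply NNPP; intro; apply Hcon; exists i, (eb 0), k; auto using l2_eb).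
  destruct (eventually_all_below d (fun i N => forall n, (N <= n)%nat ->
      vnorm_le (vsub (conj_tuple (W (phi n)) (Wa (phi n)) (Hs (phi n)) i (eb 0)) (H' i (eb 0))) (1/4))) as [N HN].
  { intros. apply H0. lia. }
  { intros i Hi. apply (Hsot i Hi (eb 0) (l2_eb 0) (1/4)). lra. }
  set (n := phi N). destruct (Hix n) as [Hi [Hbig [Hun Hu0]]].
  specialize (HN (fst (ix n)) Hi N (le_n _)). fold n in HN.
  apply Hbig, vnorm_le_mono with (1/4); [|lra].
  replace (vsub (conj_tuple (W n) (Wa n) (Hs n) (fst (ix n)) (eb 0)) (H' (fst (ix n)) (eb 0)))
    with (Wa n (Hs n (fst (ix n)) (snd (ix n)))) in HN.
  - apply (unitary_adjoint_vnorm_le (W n) (Wa n) _ _ Hun); auto.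
    apply l2_op_apply; [apply HH; auto|]. rewrite <- Hu0. apply (unitary_l2 _ _ _ Hun), l2_eb.
  - apply functional_extensionality; intro k. unfold vsub, conj_tuple. rewrite Hz, Hu0 by auto.
    unfold Cadd, Copp, C0; Cring.
Qed.

Lemma sot_conv_sub_reindex d d' (Z Z' : nat -> tuple) phi Y (idx : nat -> nat) :
  (forall i, (i < d')%nat -> (idx i < d)%nat /\ forall n x, Z' n i x = Z n (idx i) x) ->
  sot_conv_sub d Z phi Y -> sot_conv_sub d' Z' phi (fun i => Y (idx i)).
Proof.
  intros Hidx Hsot i Hi x Hx eps He. destruct (Hidx i Hi) as [Hi' HZ].
  destruct (Hsot (idx i) Hi' x Hx eps He) as [N HN]. exists N. intros n Hn. rewrite HZ. auto.
Qed.

Lemma exists_unitaries_joint_sot_cv d (X : tuple) (Hs : nat -> tuple) :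
  is_tuple d X -> (forall n, is_tuple d (Hs n)) -> (forall n, tnorm_eq d (Hs n) 1) ->
  exists (W Wa : nat -> op) (phi : nat -> nat) (X' H' : tuple),
    (forall n, is_unitary (W n) (Wa n)) /\ is_tuple d X' /\ is_tuple d H' /\
    (exists i x k, (i < d)%nat /\ l2 x /\ H' i x k <> C0) /\ strictly_incr phi /\
    sot_conv_sub d (fun n => conj_tuple (W n) (Wa n) X) phi X' /\
    sot_conv_sub d (fun n => conj_tuple (W n) (Wa n) (Hs n)) phi H'.
Proof.
  intros HX HH Heq. destruct (tuple_bounded d X HX) as [cX [HcX HbX]].
  set (c := Rmax cX 1). assert (Hc1 : 1 <= c) by apply Rmax_r.
  assert (HbX' : tnorm_le d X c) by (intros i Hi; apply opnorm_le_mono with cX; [auto | apply Rmax_l]).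
  destruct (nat_choice (fun n p => good_frame d X (Hs n) (fst p) (snd p))) as [f Hf].
  { intro n. destruct (exists_good_frame d X (Hs n) c) as [ix [uv Hg]]; auto. exists (ix, uv). auto. }
  set (W n := fst (snd (f n))). set (Wa n := snd (snd (f n))).
  set (Z n := conj_tuple (W n) (Wa n) (joint_tuple d X (Hs n))).
  assert (HZ : forall n a, (a < 2 * d)%nat -> is_op (Z n a) /\ opnorm_le (Z n a) c).
  { intros n a Ha. destruct (joint_tuple_bounded d X (Hs n) c HX HbX' (HH n) (proj1 (Heq n)) Hc1 a ltac:(lia)).
    apply conj_op; auto. apply Hf. }
  destruct (sot_compact_finite_columns (2 * d) Z c (fun j => stage_len (S (2 * d)) (S j)))
    as [phi [Y [Hphi [HY Hsot]]]].
  - intros n a Ha. apply HZ; auto.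
  - intros n a Ha. apply HZ; auto.
  - intros n a j Ha. apply Hf. lia.
  - assert (HsotX : sot_conv_sub d (fun n => conj_tuple (W n) (Wa n) X) phi (fun i => Y i)).
    { apply (sot_conv_sub_reindex (2 * d) d Z _ phi Y (fun i => i)); auto.
      intros i Hi. split; [lia|]. intros. unfold Z, conj_tuple. rewrite joint_tuple_X; auto. }
    assert (HsotH : sot_conv_sub d (fun n => conj_tuple (W n) (Wa n) (Hs n)) phi (fun i => Y (i + d)%nat)).
    { apply (sot_conv_sub_reindex (2 * d) d Z _ phi Y (fun i => i + d)%nat); auto.
      intros i Hi. split; [lia|]. intros. unfold Z, conj_tuple. rewrite joint_tuple_H; auto. }
    exists W, Wa, phi, (fun i => Y i), (fun i => Y (i + d)%nat).
    split; [intro; apply Hf|]. split; [intros i Hi; apply HY; lia|]. split; [intros i Hi; apply HY; lia|].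
    split; auto. apply (sot_limit_nonzero d W Wa Hs (fun n => fst (f n)) phi); auto.
    intro n. destruct (Hf n) as [Hi [Hbig [Hun [Hu0 _]]]]. auto.
Qed.

Theorem lemma4p5 :
  forall d : nat,
  (* (i) *)
  (forall X : nat -> tuple,
     (forall n, is_tuple d (X n)) ->
     (exists c, forall n, tnorm_le d (X n) c) ->
     (forall (u v : nat -> op),
        (forall n, shift_form_unitary d (X n) (u n) (v n)) ->
        exists (phi : nat -> nat) (Y : tuple),
          strictly_incr phi /\ is_tuple d Y /\
          sot_conv_sub d (fun n => conj_tuple (u n) (v n) (X n)) phi Y)
     /\
     (exists (U V : nat -> op) (phi : nat -> nat) (Y : tuple),
        (forall n, is_unitary (U n) (V n)) /\
        strictly_incr phi /\ is_tuple d Y /\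
        sot_conv_sub d (fun n => conj_tuple (U n) (V n) (X n)) phi Y))
  /\
  (* (ii) *)
  (forall (X : tuple) (Hs : nat -> tuple),
     is_tuple d X ->
     (forall n, is_tuple d (Hs n)) ->
     (forall n, tnorm_eq d (Hs n) 1) ->
     exists (W Wa : nat -> op) (phi : nat -> nat) (X' H' : tuple),
       (forall n, is_unitary (W n) (Wa n)) /\
       is_tuple d X' /\ is_tuple d H' /\
       (exists i x k, (i < d)%nat /\ l2 x /\ H' i x k <> C0) /\
       strictly_incr phi /\
       sot_conv_sub d (fun n => conj_tuple (W n) (Wa n) X) phi X' /\
       sot_conv_sub d (fun n => conj_tuple (W n) (Wa n) (Hs n)) phi H').
Proof.
  intro d. split.
  - intros X HX Hc. split.
    + apply shift_forms_sot_cv; auto.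
    + apply exists_unitaries_sot_cv; auto.
  - apply exists_unitaries_joint_sot_cv.
Qed.
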